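(* For every real $\mu$ and every morphism $(\rho,\chi):(\Sigma,U)\to(\widetilde\Sigma,\widetilde U)$ of $\mathsf{Cauchy}(\mathbb{M}^2)$, $$\eta_{(\widetilde\Sigma,\widetilde U)}\circ\mathfrak{D}^{(\mu,0)}\chi=\mathfrak{D}^{(\mu)}_\ell(\rho,\chi)\circ\eta_{(\Sigma,U)}\quad\text{as maps }\mathfrak{D}(U)\to\mathfrak{D}(\widetilde\Sigma).$$
   Context: $\mathbb{M}^2$ is $\mathbb{R}^2$ with null coordinates $u=t-x$, $v=t+x$, metric $du\,dv$, orientation $dt\wedge dx$, time-orientation $\partial_t$. $\mathsf{Cauchy}(\mathbb{M}^2)$ has objects $(\Sigma,U)$ with $U\subseteq\mathbb{M}^2$ open and causally convex and $\Sigma$ a (smooth spacelike) Cauchy surface of $U$; a morphism $(\rho,\chi):(\Sigma,U)\to(\widetilde\Sigma,\widetilde U)$ is a conformally admissible embedding $\chi:U\to\widetilde U$ (smooth embedding with open causally convex image preserving orientation, time-orientation and the conformal class of the metric) restricting to an orientation-preserving embedding $\rho:\Sigma\to\widetilde\Sigma$. Such $\chi$ satisfies $\chi^*du=\omega_\ell\,du$, $\chi^*dv=\omega_r\,dv$ for positive smooth functions $\omega_\ell,\omega_r$ on $U$. Each Cauchy surface carries the coordinate $s$ given by restricting $(u,v)\mapsto-u$. Maps: $\mathfrak{D}^{(\mu,0)}\chi(h):=(\omega_\ell^{\mu-1}\omega_r^{-1}h)\circ\chi^{-1}$ on $\chi(U)$, extended by zero, for $h\in\mathfrak{D}(U)=C_c^\infty(U)$;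 $\mathfrak{D}^{(\mu)}_\ell(\rho,\chi)(f):=(\omega_\ell|_\Sigma^{\mu-1}f)\circ\rho^{-1}$ on $\rho(\Sigma)$, extended by zero, for $f\in\mathfrak{D}(\Sigma)$; and $(\eta_{(\Sigma,U)}h)(s):=\int_{\mathbb{R}}h(-s,v)\,dv$ (with $h$ extended by zero outside $U$), regarded as a function on $\Sigma$ via the coordinate $s$. *)

From Coquelicot Require Import Coquelicot.
From Stdlib Require Import Reals List ClassicalEpsilon.
Open Scope R_scope.

Definition pt := (R * R)%type.
Definition tc (p : pt) : R := fst p.
Definition xc (p : pt) : R := snd p.
Definition uc (p : pt) : R := tc p - xc p.
Definition vc (p : pt) : R := tc p + xc p.
Definition pt_uv (u v : R) : pt := ((u + v) / 2, (v - u) / 2).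

(* tangent vectors X = (X^t, X^x); du, dv and the metric g = du dv
   (symmetrised), i.e. g(X,X) = du(X) dv(X) = (X^t)^2 - (X^x)^2 *)
Definition du (X : pt) : R := fst X - snd X.
Definition dv (X : pt) : R := fst X + snd X.
Definition gM (X Y : pt) : R := (du X * dv Y + dv X * du Y) / 2.
(* future-directed timelike (time-orientation given by d/dt) *)
Definition future_timelike (X : pt) : Prop := gM X X > 0 /\ fst X > 0.

Definition Dt (f : pt -> R) (p : pt) : R := Derive (fun t => f (t, snd p)) (fst p).
Definition Dx (f : pt -> R) (p : pt) : R := Derive (fun x => f (fst p, x)) (snd p).
(* iterated partial derivative along a word of directions (true = t, false = x) *)
Fixpoint dpart (w : list bool) (f : pt -> R) : pt -> R :=
  match w with
  | nil => f
  | true :: w' => Dt (dpart w' f)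
  | false :: w' => Dx (dpart w' f)
  end.
Definition smooth_on (U : pt -> Prop) (f : pt -> R) : Prop :=
  forall (w : list bool) (p : pt), U p ->
    ex_derive (fun t => dpart w f (t, snd p)) (fst p) /\
    ex_derive (fun x => dpart w f (fst p, x)) (snd p) /\
    continuous (dpart w f) p.
Definition smooth1 (f : R -> R) : Prop := forall (n : nat) (a : R), ex_derive_n f n a.

Definition causal_le (p q : pt) : Prop := uc p <= uc q /\ vc p <= vc q.
Definition causally_convex (U : pt -> Prop) : Prop :=
  forall p q r, U p -> U q -> causal_le p r -> causal_le r q -> U r.

Definition compact2 (K : pt -> Prop) : Prop :=
  forall (I : Type) (O : I -> pt -> Prop),
    (forall i, open (O i)) -> (forall p, K p -> exists i, O i p) ->
    exists l : list I, forall p, K p -> exists i, In i l /\ O i p.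

Definition smooth_curve (s : R -> pt) : Prop :=
  smooth1 (fun a => fst (s a)) /\ smooth1 (fun a => snd (s a)).
Definition velocity (s : R -> pt) (a : R) : pt :=
  (Derive (fun b => fst (s b)) a, Derive (fun b => snd (s b)) a).

(* Σ is a smooth embedded spacelike 1-dimensional submanifold of R^2:
   locally (in some open W around each of its points) Σ ∩ W is the image of
   a smooth injective curve with spacelike velocity which is a homeomorphism
   onto Σ ∩ W (up to reparametrisation every open interval is R). *)
Definition spacelike_hypersurface (S : pt -> Prop) : Prop :=
  forall p, S p -> exists (W : pt -> Prop) (s : R -> pt),
    open W /\ W p /\ smooth_curve s /\
    (forall a, gM (velocity s a) (velocity s a) < 0) /\
    (forall a b, s a = s b -> a = b) /\
    (forall a, S (s a) /\ W (s a)) /\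
    (forall q, S q -> W q -> exists a, s a = q) /\
    (forall a eps, eps > 0 -> exists del, del > 0 /\ forall b,
        Rabs (fst (s b) - fst (s a)) < del -> Rabs (snd (s b) - snd (s a)) < del ->
        Rabs (b - a) < eps).

Definition inext_timelike_curve (U : pt -> Prop) (c : R -> pt) : Prop :=
  smooth_curve c /\
  (forall a, future_timelike (velocity c a)) /\
  (forall a, U (c a)) /\
  ~ (exists p, U p /\ filterlim c (Rbar_locally p_infty) (locally p)) /\
  ~ (exists p, U p /\ filterlim c (Rbar_locally m_infty) (locally p)).

Definition cauchy_in (S U : pt -> Prop) : Prop :=
  forall c, inext_timelike_curve U c ->
    exists a, S (c a) /\ forall b, S (c b) -> b = a.

Definition cauchy_object (S U : pt -> Prop) : Prop :=
  open U /\ causally_convex U /\ (forall p, S p -> U p) /\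
  spacelike_hypersurface S /\ cauchy_in S U.

Definition dchi (chi : pt -> pt) (p X : pt) : pt :=
  (fst X * Dt (fun q => fst (chi q)) p + snd X * Dx (fun q => fst (chi q)) p,
   fst X * Dt (fun q => snd (chi q)) p + snd X * Dx (fun q => snd (chi q)) p).
Definition jac_det (chi : pt -> pt) (p : pt) : R :=
  Dt (fun q => fst (chi q)) p * Dx (fun q => snd (chi q)) p -
  Dx (fun q => fst (chi q)) p * Dt (fun q => snd (chi q)) p.

Definition conf_admissible (chi : pt -> pt) (U Ut : pt -> Prop) : Prop :=
  smooth_on U (fun q => fst (chi q)) /\ smooth_on U (fun q => snd (chi q)) /\
  (* embedding: injective immersion, homeomorphism onto its image *)
  (forall p q, U p -> U q -> chi p = chi q -> p = q) /\
  (forall p, U p -> jac_det chi p <> 0) /\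
  (forall p eps, U p -> eps > 0 -> exists del, del > 0 /\ forall q, U q ->
      Rabs (fst (chi q) - fst (chi p)) < del -> Rabs (snd (chi q) - snd (chi p)) < del ->
      Rabs (fst q - fst p) < eps /\ Rabs (snd q - snd p) < eps) /\
  (forall p, U p -> Ut (chi p)) /\
  open (fun q => exists p, U p /\ chi p = q) /\
  causally_convex (fun q => exists p, U p /\ chi p = q) /\
  (forall p, U p -> jac_det chi p > 0) /\
  (forall p X, U p -> future_timelike X -> future_timelike (dchi chi p X)) /\
  (exists Om : pt -> R, forall p, U p -> Om p > 0 /\
      forall X Y, gM (dchi chi p X) (dchi chi p Y) = Om p * gM X Y).

(* coordinate s on Cauchy surfaces: restriction of (u,v) |-> -u *)
Definition s_coord (p : pt) : R := - uc p.

(* morphisms (rho, chi) : (Σ,U) -> (Σt,Ut); rho is the restriction of chi to Σ,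
   required to land in Σt and to be orientation preserving (Σ oriented by s) *)
Definition cauchy_morphism (S U St Ut : pt -> Prop) (chi : pt -> pt) : Prop :=
  conf_admissible chi U Ut /\
  (forall p, S p -> St (chi p)) /\
  (forall p, S p -> exists del, del > 0 /\ forall q q', S q -> S q' ->
      Rabs (fst q - fst p) < del -> Rabs (snd q - snd p) < del ->
      Rabs (fst q' - fst p) < del -> Rabs (snd q' - snd p) < del ->
      s_coord q < s_coord q' -> s_coord (chi q) < s_coord (chi q')).

Definition pullback_du (chi : pt -> pt) (U : pt -> Prop) (oml : pt -> R) : Prop :=
  forall p X, U p -> du (dchi chi p X) = oml p * du X.
Definition pullback_dv (chi : pt -> pt) (U : pt -> Prop) (omr : pt -> R) : Prop :=
  forall p X, U p -> dv (dchi chi p X) = omr p * dv X.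

(* h ∈ D(U) = C_c^∞(U), represented by its extension by zero to R^2 *)
Definition test_function (U : pt -> Prop) (h : pt -> R) : Prop :=
  smooth_on (fun _ => True) h /\
  exists K : pt -> Prop, compact2 K /\ (forall p, K p -> U p) /\
    (forall p, ~ K p -> h p = 0).

(* pushforward along chi restricted to A: (f ∘ chi^{-1}) on chi(A), 0 elsewhere *)
Definition push (A : pt -> Prop) (chi : pt -> pt) (f : pt -> R) (q : pt) : R :=
  match excluded_middle_informative (exists p, A p /\ chi p = q) with
  | left H => f (proj1_sig (constructive_indefinite_description _ H))
  | right _ => 0
  end.

Definition D_mu0 (mu : R) (U : pt -> Prop) (chi : pt -> pt) (oml omr : pt -> R)
  (h : pt -> R) : pt -> R :=
  push U chi (fun p => Rpower (oml p) (mu - 1) * / omr p * h p).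

(* D^{(mu)}_l (rho,chi) (f) = (oml|_Σ^{mu-1} f) ∘ rho^{-1} on rho(Σ), extended by 0;
   functions on Σ are represented as functions on R^2 evaluated on Σ *)
Definition D_ell (mu : R) (S : pt -> Prop) (chi : pt -> pt) (oml : pt -> R)
  (f : pt -> R) : pt -> R :=
  push S chi (fun p => Rpower (oml p) (mu - 1) * f p).

(* (eta h)(s) = ∫_R h(-s, v) dv (h in null coordinates), regarded as a function
   on the Cauchy surface via s = -u: its value at p ∈ Σ is ∫ h(u(p), v) dv *)
Definition eta (h : pt -> R) (p : pt) : R :=
  RInt_gen (fun w => h (pt_uv (uc p) w)) (Rbar_locally m_infty) (Rbar_locally p_infty).

(* Since chi^* du = oml du, the map chi sends each null segment {u = u0} of U into a null line
   {u = const}, acting on the coordinate v with derivative omr, and oml is constant along the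
   segment.  On the null line through chi p0 the substitution v' = v (chi (u0, v)) therefore turns
   the integral of (oml^(mu-1) omr^-1 h) o chi^-1 dv' into oml(p0)^(mu-1) times the integral of
   h (u0, v) dv.  The null line through a point q of the target Cauchy surface meets chi(U) only if
   q lies in chi(Sigma): every null segment of U meets the Cauchy surface Sigma (otherwise a
   timelike curve hugging the segment would miss it), chi maps that segment into the null line
   through q, and a spacelike achronal surface meets a null line at most once. *)

From Coquelicot Require Import Coquelicot.
From Stdlib Require Import Reals Lra Classical ClassicalEpsilon FunctionalExtensionality List.
Open Scope R_scope.

Fixpoint Cn (n : nat) (f : R -> R) : Prop :=
  match n with
  | O => True
  | S m => (forall x, ex_derive f x) /\ Cn m (Derive f)
  end.

Definition Cinf (f : R -> R) : Prop := forall n, Cn n f.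

Lemma Cn_ext n f g : (forall x, f x = g x) -> Cn n f -> Cn n g.
Proof. intros E; replace g with f; [auto | now apply functional_extensionality]. Qed.

Lemma Cn_pred n f : Cn (S n) f -> Cn n f.
Proof.
  revert f; induction n as [|n IH]; intros f [Hf HDf]; simpl; auto.
Qed.

Lemma Cn_const n c : Cn n (fun _ => c).
Proof.
  revert c; induction n as [|n IH]; intros c; simpl; auto.
  split; [intros; apply ex_derive_const |].
  apply Cn_ext with (fun _ => 0); [intros; now rewrite Derive_const | apply IH].
Qed.

Lemma Cn_id n : Cn n (fun x => x).
Proof.
  destruct n; simpl; auto.
  split; [intros; apply ex_derive_id |].
  apply Cn_ext with (fun _ => 1); [intros; now rewrite Derive_id | apply Cn_const].
Qed.

Lemma Cn_plus n f g : Cn n f -> Cn n g -> Cn n (fun x => f x + g x).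
Proof.
  revert f g; induction n as [|n IH]; intros f g Hf Hg; [exact I |].
  destruct Hf as [Hf HDf], Hg as [Hg HDg].
  split; [intros x; apply (ex_derive_plus f g); auto |].
  apply Cn_ext with (fun x => Derive f x + Derive g x); [| now apply IH].
  intros x; now rewrite Derive_plus.
Qed.

Lemma Cn_mult n f g : Cn n f -> Cn n g -> Cn n (fun x => f x * g x).
Proof.
  revert f g; induction n as [|n IH]; intros f g Hf Hg; simpl; auto.
  pose proof (Cn_pred _ _ Hf) as Hf'. pose proof (Cn_pred _ _ Hg) as Hg'.
  destruct Hf as [Hf HDf], Hg as [Hg HDg].
  split; [intros x; apply (ex_derive_mult f g); auto |].
  apply Cn_ext with (fun x => Derive f x * g x + f x * Derive g x).
  - intros x; now rewrite Derive_mult.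
  - apply Cn_plus; now apply IH.
Qed.

Lemma Cn_comp n f g : Cinf f -> Cn n g -> Cn n (fun x => f (g x)).
Proof.
  revert f g; induction n as [|n IH]; intros f g Hf Hg; simpl; auto.
  pose proof (Cn_pred _ _ Hg) as Hg'. destruct Hg as [Hg HDg].
  destruct (Hf 1%nat) as [Hf1 _].
  split; [intros x; apply (ex_derive_comp f g); auto |].
  apply Cn_ext with (fun x => Derive g x * Derive f (g x)).
  - intros x; rewrite (Derive_comp f g); auto.
  - apply Cn_mult; [auto | apply IH; [intros k; apply (Hf (S k)) | auto]].
Qed.

Lemma Cn_inv n f : (forall x, f x <> 0) -> Cn n f -> Cn n (fun x => / f x).
Proof.
  intros Hnz; induction n as [|n IH]; intros Hf; simpl; auto.
  pose proof (Cn_pred _ _ Hf) as Hf'. destruct Hf as [Hf HDf].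
  split; [intros x; apply ex_derive_inv; auto |].
  apply Cn_ext with (fun x => (-1 * Derive f x) * (/ f x * / f x)).
  - intros x; rewrite Derive_inv by auto. field. auto.
  - apply Cn_mult; [apply Cn_mult; [apply Cn_const | auto] | apply Cn_mult; auto].
Qed.

Lemma Cinf_plus f g : Cinf f -> Cinf g -> Cinf (fun x => f x + g x).
Proof. intros Hf Hg n; now apply Cn_plus. Qed.
Lemma Cinf_mult f g : Cinf f -> Cinf g -> Cinf (fun x => f x * g x).
Proof. intros Hf Hg n; now apply Cn_mult. Qed.
Lemma Cinf_const c : Cinf (fun _ => c).
Proof. intros n; apply Cn_const. Qed.
Lemma Cinf_id : Cinf (fun x => x).
Proof. intros n; apply Cn_id. Qed.
Lemma Cinf_comp f g : Cinf f -> Cinf g -> Cinf (fun x => f (g x)).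
Proof. intros Hf Hg n; now apply Cn_comp. Qed.
Lemma Cinf_inv f : (forall x, f x <> 0) -> Cinf f -> Cinf (fun x => / f x).
Proof. intros Hnz Hf n; now apply Cn_inv. Qed.
Lemma Cinf_ext f g : (forall x, f x = g x) -> Cinf f -> Cinf g.
Proof. intros E Hf n; now apply Cn_ext with f. Qed.
Lemma Cinf_opp f : Cinf f -> Cinf (fun x => - f x).
Proof.
  intros Hf. apply Cinf_ext with (fun x => -1 * f x); [intros; ring |].
  apply Cinf_mult; [apply Cinf_const | exact Hf].
Qed.
Lemma Cinf_comp_opp f : Cinf f -> Cinf (fun x => f (- x)).
Proof. intros Hf. apply (Cinf_comp f (fun x => - x)); [exact Hf | apply Cinf_opp, Cinf_id]. Qed.
Lemma Cinf_ex_derive f : Cinf f -> forall x, ex_derive f x.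
Proof. intros Hf; apply (Hf 1%nat). Qed.

Lemma Cinf_exp : Cinf exp.
Proof.
  intros n; induction n as [|n IH]; simpl; auto.
  split; [intros x; eexists; apply is_derive_exp |].
  apply Cn_ext with exp; [| auto].
  intros x; symmetry; apply is_derive_unique, is_derive_exp.
Qed.

Lemma Cinf_affine c k : Cinf (fun s => c + k * s).
Proof. apply Cinf_plus; [apply Cinf_const | apply Cinf_mult; [apply Cinf_const | apply Cinf_id]]. Qed.

Lemma Cn_ex_derive_Derive_n n f : Cn (S n) f -> forall x, ex_derive (Derive_n f n) x.
Proof.
  revert f; induction n as [|n IH]; intros f Hf x; [apply Hf |].
  apply ex_derive_ext with (Derive_n (Derive f) n); [| apply IH, Hf].
  intros t. rewrite (Derive_n_ext (Derive f) (Derive_n f 1)) by reflexivity.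
  rewrite Derive_n_comp. now rewrite Nat.add_comm.
Qed.

Lemma Cinf_smooth1 f : Cinf f -> smooth1 f.
Proof. intros Hf [|n] x; [exact I | exact (Cn_ex_derive_Derive_n n f (Hf (S n)) x)]. Qed.

Lemma is_lim_exp_opp_p : is_lim (fun t => exp (- t)) p_infty 0.
Proof.
  apply (is_lim_comp exp Ropp p_infty 0 m_infty).
  - apply is_lim_exp_m.
  - apply (is_lim_opp (fun t => t) p_infty p_infty), is_lim_id.
  - exists 0; intros; discriminate.
Qed.

Lemma is_lim_exp_opp_m : is_lim (fun t => exp (- t)) m_infty p_infty.
Proof.
  apply (is_lim_comp exp Ropp m_infty p_infty p_infty).
  - apply is_lim_exp_p.
  - apply (is_lim_opp (fun t => t) m_infty m_infty), is_lim_id.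
  - exists 0; intros; discriminate.
Qed.

Definition increasing_onto (a b : Rbar) (phi : R -> R) : Prop :=
  Cinf phi /\ (forall t, 0 < Derive phi t) /\
  (forall t, Rbar_lt a (phi t) /\ Rbar_lt (phi t) b) /\
  is_lim phi m_infty a /\ is_lim phi p_infty b.

Lemma increasing_onto_bounded (a b : R) : a < b ->
  increasing_onto a b (fun t => a + (b - a) * / (1 + exp (- t))).
Proof.
  intros Hab.
  assert (Hpos : forall t, 0 < 1 + exp (- t)) by (intros t; pose proof (exp_pos (- t)); lra).
  split; [| split; [| split; [| split]]].
  - apply Cinf_plus; [apply Cinf_const |]. apply Cinf_mult; [apply Cinf_const |].
    apply Cinf_inv; [intros t; specialize (Hpos t); lra |].
    apply Cinf_plus; [apply Cinf_const | apply Cinf_comp_opp, Cinf_exp].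
  - intros t. specialize (Hpos t). pose proof (exp_pos (- t)).
    rewrite (is_derive_unique _ t ((b - a) * exp (- t) / (1 + exp (- t)) ^ 2)).
    + apply Rdiv_lt_0_compat; [nra | apply pow_lt; lra].
    + auto_derive; [lra | field; lra].
  - intros t; simpl. specialize (Hpos t). pose proof (exp_pos (- t)).
    assert (0 < / (1 + exp (- t)) < 1).
    { split; [now apply Rinv_0_lt_compat |]. rewrite <- Rinv_1. apply Rinv_lt_contravar; lra. }
    nra.
  - replace (Finite a) with (Rbar_plus a (Rbar_mult (b - a) (Rbar_inv p_infty)))
      by (simpl; f_equal; ring).
    apply is_lim_plus'; [apply is_lim_const |].
    apply (is_lim_scal_l (fun t => / (1 + exp (- t))) (b - a) m_infty 0).
    apply (is_lim_inv _ m_infty p_infty); [| discriminate].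
    apply (is_lim_plus (fun _ => 1) (fun t => exp (- t)) m_infty 1 p_infty).
    + apply is_lim_const.
    + apply is_lim_exp_opp_m.
    + reflexivity.
  - replace (Finite b) with (Rbar_plus a (Rbar_mult (b - a) (Rbar_inv (1 + 0))))
      by (simpl; f_equal; field).
    apply is_lim_plus'; [apply is_lim_const |].
    apply (is_lim_scal_l (fun t => / (1 + exp (- t))) (b - a) p_infty (/ (1 + 0))).
    apply (is_lim_inv _ p_infty (1 + 0)); [| simpl; intros E; injection E; lra].
    apply (is_lim_plus (fun _ => 1) (fun t => exp (- t)) p_infty 1 0).
    + apply is_lim_const.
    + apply is_lim_exp_opp_p.
    + reflexivity.
Qed.

Lemma increasing_onto_ray_p (a : R) : increasing_onto a p_infty (fun t => a + exp t).
Proof.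
  split; [| split; [| split; [| split]]].
  - apply Cinf_plus; [apply Cinf_const | apply Cinf_exp].
  - intros t. rewrite (is_derive_unique _ t (exp t)); [apply exp_pos | auto_derive; auto; ring].
  - intros t; simpl. pose proof (exp_pos t). split; [lra | exact I].
  - replace (Finite a) with (Rbar_plus a 0) by (simpl; f_equal; ring).
    apply is_lim_plus'; [apply is_lim_const | apply is_lim_exp_m].
  - apply (is_lim_plus _ _ p_infty a p_infty); [apply is_lim_const | apply is_lim_exp_p | reflexivity].
Qed.

Lemma increasing_onto_ray_m (b : R) : increasing_onto m_infty b (fun t => b - exp (- t)).
Proof.
  split; [| split; [| split; [| split]]].
  - apply Cinf_plus; [apply Cinf_const | apply Cinf_opp, Cinf_comp_opp, Cinf_exp].
  - intros t. rewrite (is_derive_unique _ t (exp (- t))); [apply exp_pos | auto_derive; auto; ring].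
  - intros t; simpl. pose proof (exp_pos (- t)). split; [exact I | lra].
  - apply (is_lim_minus _ _ m_infty b p_infty);
      [apply is_lim_const | apply is_lim_exp_opp_m | reflexivity].
  - replace (Finite b) with (Rbar_minus b 0) by (simpl; f_equal; ring).
    apply is_lim_minus'; [apply is_lim_const | apply is_lim_exp_opp_p].
Qed.

Lemma increasing_onto_line : increasing_onto m_infty p_infty (fun t => t).
Proof.
  split; [| split; [| split; [| split]]].
  - apply Cinf_id.
  - intros t. rewrite Derive_id. lra.
  - intros t; simpl; auto.
  - apply is_lim_id.
  - apply is_lim_id.
Qed.

Lemma increasing_onto_exists (a b : Rbar) : Rbar_lt a b -> exists phi, increasing_onto a b phi.
Proof.
  destruct a as [a| |], b as [b| |]; simpl; try contradiction; intros Hab.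
  - eexists; now apply increasing_onto_bounded.
  - eexists; apply increasing_onto_ray_p.
  - eexists; apply increasing_onto_ray_m.
  - eexists; apply increasing_onto_line.
Qed.

Lemma increasing_onto_surj (a b : Rbar) phi : increasing_onto a b phi ->
  forall s : R, Rbar_lt a s -> Rbar_lt s b -> exists t, phi t = s.
Proof.
  intros [Hphi [_ [_ [Hm Hp]]]] s Has Hsb.
  assert (Hc : forall x : R, Rbar_lt m_infty x -> Rbar_lt x p_infty -> continuity_pt phi x).
  { intros x _ _. apply continuity_pt_filterlim, (ex_derive_continuous phi), Cinf_ex_derive, Hphi. }
  destruct (IVT_Rbar_incr phi m_infty p_infty a b s Hm Hp Hc I (conj Has Hsb)) as [t [_ [_ Ht]]].
  now exists t.
Qed.

Lemma uc_pt_uv u v : uc (pt_uv u v) = u.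
Proof. unfold uc, tc, xc, pt_uv; simpl; field. Qed.

Lemma vc_pt_uv u v : vc (pt_uv u v) = v.
Proof. unfold vc, tc, xc, pt_uv; simpl; field. Qed.

Lemma pt_uv_uc_vc p : pt_uv (uc p) (vc p) = p.
Proof. destruct p as [t x]; unfold pt_uv, uc, vc, tc, xc; simpl; f_equal; field. Qed.

Lemma pt_eq_uv p q : uc p = uc q -> vc p = vc q -> p = q.
Proof. intros Hu Hv. now rewrite <- (pt_uv_uc_vc p), <- (pt_uv_uc_vc q), Hu, Hv. Qed.

Lemma locally_uv (p : pt) (P : pt -> Prop) : locally p P <->
  exists d, 0 < d /\ forall q, Rabs (uc q - uc p) < d -> Rabs (vc q - vc p) < d -> P q.
Proof.
  destruct p as [t0 x0]; unfold uc, vc, tc, xc; simpl. split.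
  - intros [e He]. exists e; split; [apply cond_pos |].
    intros [t x] Hu Hv; simpl in Hu, Hv.
    apply Rabs_def2 in Hu as [Hu1 Hu2]; apply Rabs_def2 in Hv as [Hv1 Hv2].
    apply He. split; [change (Rabs (t - t0) < e) | change (Rabs (x - x0) < e)];
      apply Rabs_def1; lra.
  - intros [d [Hd HP]]. assert (Hd2 : 0 < d / 2) by lra.
    exists (mkposreal _ Hd2). intros [t x] [Ht Hx].
    change (Rabs (t - t0) < d / 2) in Ht. change (Rabs (x - x0) < d / 2) in Hx.
    apply Rabs_def2 in Ht as [Ht1 Ht2]; apply Rabs_def2 in Hx as [Hx1 Hx2].
    apply HP; simpl; apply Rabs_def1; lra.
Qed.

Lemma continuous_pt_uv (a b : R -> R) (s : R) : continuous a s -> continuous b s ->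
  continuous (fun s => pt_uv (a s) (b s)) s.
Proof.
  intros Ha Hb P HP. apply locally_uv in HP as [d [Hd HP]].
  assert (Hball : forall c : R, locally c (fun y => Rabs (y - c) < d)).
  { intros c. exists (mkposreal d Hd). auto. }
  assert (Ha' : locally s (fun y => Rabs (a y - a s) < d)) by exact (Ha _ (Hball (a s))).
  assert (Hb' : locally s (fun y => Rabs (b y - b s) < d)) by exact (Hb _ (Hball (b s))).
  change (locally s (fun y => P (pt_uv (a y) (b y)))).
  refine (filter_imp _ _ _ (filter_and _ _ Ha' Hb')).
  intros y [Hy1 Hy2]. apply HP; rewrite ?uc_pt_uv, ?vc_pt_uv; assumption.
Qed.

Definition chron (p q : pt) : Prop := uc p < uc q /\ vc p < vc q.
Definition chron_future (S : pt -> Prop) (r : pt) : Prop := exists s, S s /\ chron s r.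
Definition chron_past (S : pt -> Prop) (r : pt) : Prop := exists s, S s /\ chron r s.
Definition achronal (S : pt -> Prop) : Prop := forall p q, S p -> S q -> ~ chron p q.

Lemma chron_future_causal S r r' : chron_future S r -> causal_le r r' -> chron_future S r'.
Proof. intros [s [Ss Hs]] Hr. exists s. split; auto. unfold chron, causal_le in *; lra. Qed.

Lemma achronal_future_past S r : achronal S -> chron_future S r -> chron_past S r -> False.
Proof.
  intros Hach [s1 [S1 H1]] [s2 [S2 H2]]. apply (Hach s1 s2 S1 S2). unfold chron in *; lra.
Qed.

Lemma interval_Glb_Lub_iff (J : R -> Prop) :
  (forall s, J s -> locally s J) -> (forall s1 s2 s, J s1 -> J s2 -> s1 <= s <= s2 -> J s) ->
  forall s, J s <-> Rbar_lt (Glb_Rbar J) s /\ Rbar_lt s (Lub_Rbar J).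
Proof.
  intros Hopen Hconv s.
  destruct (Glb_Rbar_correct J) as [Hlb Hglb]. destruct (Lub_Rbar_correct J) as [Hub Hlub].
  split.
  - intros Hs. destruct (Hopen s Hs) as [e He].
    assert (J1 : J (s - e / 2)).
    { apply He. change (Rabs (s - e / 2 - s) < e). rewrite Rabs_left; pose proof (cond_pos e); lra. }
    assert (J2 : J (s + e / 2)).
    { apply He. change (Rabs (s + e / 2 - s) < e). rewrite Rabs_right; pose proof (cond_pos e); lra. }
    specialize (Hlb _ J1). specialize (Hub _ J2). pose proof (cond_pos e).
    split; [destruct (Glb_Rbar J) | destruct (Lub_Rbar J)]; simpl in *; auto; lra.
  - intros [H1 H2].
    assert (E1 : exists s1, J s1 /\ s1 <= s).
    { apply NNPP; intros Hn.
      assert (Hs : is_lb_Rbar J s).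
      { intros x Hx. simpl. apply Rnot_lt_le. intros Hlt. apply Hn. exists x; split; auto; lra. }
      specialize (Hglb _ Hs). destruct (Glb_Rbar J); simpl in *; auto; lra. }
    assert (E2 : exists s2, J s2 /\ s <= s2).
    { apply NNPP; intros Hn.
      assert (Hs : is_ub_Rbar J s).
      { intros x Hx. simpl. apply Rnot_lt_le. intros Hlt. apply Hn. exists x; split; auto; lra. }
      specialize (Hlub _ Hs). destruct (Lub_Rbar J); simpl in *; auto; lra. }
    destruct E1 as [s1 [J1 Hs1]], E2 as [s2 [J2 Hs2]]. now apply (Hconv s1 s2).
Qed.

Lemma Cinf_strict_incr (A : R -> R) : Cinf A -> (forall s, 0 < Derive A s) ->
  forall s s', s < s' -> A s < A s'.
Proof.
  intros HA HA' s s' H. apply (incr_function A m_infty p_infty (Derive A)); simpl; auto.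
  - intros x _ _. apply Derive_correct, Cinf_ex_derive, HA.
  - intros x _ _. apply HA'.
Qed.

Lemma smooth_curve_pt_uv (a b : R -> R) :
  Cinf a -> Cinf b -> smooth_curve (fun t => pt_uv (a t) (b t)).
Proof.
  intros Ha Hb. split; apply Cinf_smooth1; unfold pt_uv; simpl.
  - apply Cinf_mult; [apply Cinf_plus; auto | apply Cinf_const].
  - apply Cinf_mult; [apply Cinf_plus; [| apply Cinf_opp]; auto | apply Cinf_const].
Qed.

Lemma velocity_pt_uv (a b : R -> R) t : ex_derive a t -> ex_derive b t ->
  velocity (fun t => pt_uv (a t) (b t)) t = pt_uv (Derive a t) (Derive b t).
Proof.
  intros Ha Hb. unfold velocity, pt_uv; simpl.
  f_equal; apply is_derive_unique; auto_derive; try tauto;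
    change (fun x => a x) with a; change (fun x => b x) with b; field.
Qed.

Lemma future_timelike_pt_uv x y : 0 < x -> 0 < y -> future_timelike (pt_uv x y).
Proof.
  intros Hx Hy. unfold future_timelike, gM, du, dv, pt_uv; simpl. split; [| lra].
  replace (((x + y) / 2 - (y - x) / 2) * ((x + y) / 2 + (y - x) / 2) +
           ((x + y) / 2 + (y - x) / 2) * ((x + y) / 2 - (y - x) / 2)) with (2 * (x * y)) by field.
  apply Rlt_gt, Rdiv_lt_0_compat; [nra | lra].
Qed.

Lemma filterlim_locally_fst (F : (R -> Prop) -> Prop) (c : R -> pt) (p : pt) :
  filterlim c F (locally p) -> F (fun t => Rabs (fst (c t) - fst p) < 1).
Proof.
  intros Hc. apply (Hc (fun q => Rabs (fst q - fst p) < 1)).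
  exists (mkposreal 1 Rlt_0_1). intros q [Hq _]. exact Hq.
Qed.

Record timelike_uv_curve (A B : R -> R) : Prop := {
  tuv_smooth_u : Cinf A;
  tuv_smooth_v : Cinf B;
  tuv_deriv_u : forall s, 0 < Derive A s;
  tuv_deriv_v : forall s, 0 < Derive B s;
  tuv_past : is_lim (fun s => A s + B s) m_infty m_infty;
  tuv_future : is_lim (fun s => A s + B s) p_infty p_infty }.

Section TimelikeCurve.

Variables (U : pt -> Prop) (A B : R -> R).
Hypotheses (HU : open U) (HC : causally_convex U) (HAB : timelike_uv_curve A B).

Let g s := pt_uv (A s) (B s).
Let J s := U (g s).

Lemma tuv_chron s s' : s < s' -> chron (g s) (g s').
Proof.
  intros H. unfold chron, g. rewrite !uc_pt_uv, !vc_pt_uv.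
  split; apply Cinf_strict_incr; auto; apply HAB.
Qed.

Lemma tuv_causal_le s s' : s <= s' -> causal_le (g s) (g s').
Proof.
  intros [H | <-]; [destruct (tuv_chron s s' H); split; lra |].
  split; apply Rle_refl.
Qed.

Lemma tuv_continuous s : continuous g s.
Proof.
  apply continuous_pt_uv; [apply (ex_derive_continuous A) | apply (ex_derive_continuous B)];
    apply Cinf_ex_derive, HAB.
Qed.

Lemma tuv_domain_iff s : J s <-> Rbar_lt (Glb_Rbar J) s /\ Rbar_lt s (Lub_Rbar J).
Proof.
  apply interval_Glb_Lub_iff.
  - intros s' Hs'. exact (tuv_continuous s' U (HU _ Hs')).
  - intros s1 s2 s' H1 H2 [Hl Hr]. apply (HC (g s1) (g s2)); auto; now apply tuv_causal_le.
Qed.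

Lemma tuv_no_limit (F : (R -> Prop) -> Prop) {FF : ProperFilter F} (phi : R -> R) (l : Rbar) :
  filterlim phi F (Rbar_locally l) -> (forall r : R, l = r -> ~ J r) ->
  ~ (exists p, U p /\ filterlim (fun t => g (phi t)) F (locally p)).
Proof.
  intros Hphi Hl [p [Up Hlim]].
  pose proof (filterlim_locally_fst F _ p Hlim) as Hfst.
  destruct l as [r | |].
  - apply (Hl r eq_refl). unfold J.
    replace (g r) with p; [exact Up |].
    apply (@filterlim_locally_unique _ _ _ F (Proper_StrongProper F FF) (fun t => g (phi t)));
      [exact Hlim |].
    apply (filterlim_comp _ _ _ phi g F (locally r)); [exact Hphi | apply tuv_continuous].
  - assert (Hbig : F (fun t => 2 * fst p + 2 < A (phi t) + B (phi t))).
    { apply (filterlim_comp _ _ _ phi (fun s => A s + B s) F _ (Rbar_locally p_infty)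
        Hphi (tuv_future _ _ HAB) (fun y => 2 * fst p + 2 < y)). now exists (2 * fst p + 2). }
    destruct (Hierarchy.filter_ex _ (filter_and _ _ Hfst Hbig)) as [t [H1 H2]].
    unfold g, pt_uv in H1; cbn [fst] in H1. apply Rabs_def2 in H1 as [H1 _]. lra.
  - assert (Hsmall : F (fun t => A (phi t) + B (phi t) < 2 * fst p - 2)).
    { apply (filterlim_comp _ _ _ phi (fun s => A s + B s) F _ (Rbar_locally m_infty)
        Hphi (tuv_past _ _ HAB) (fun y => y < 2 * fst p - 2)). now exists (2 * fst p - 2). }
    destruct (Hierarchy.filter_ex _ (filter_and _ _ Hfst Hsmall)) as [t [H1 H2]].
    unfold g, pt_uv in H1; cbn [fst] in H1. apply Rabs_def2 in H1 as [_ H1]. lra.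
Qed.


Lemma tuv_inextendible_reparam s0 : J s0 -> exists phi : R -> R,
  (forall s, J s -> exists t, phi t = s) /\ inext_timelike_curve U (fun t => g (phi t)).
Proof.
  intros Hs0. set (a := Glb_Rbar J). set (b := Lub_Rbar J).
  assert (Hab : Rbar_lt a b).
  { apply tuv_domain_iff in Hs0 as [H1 H2]. fold a b in H1, H2. destruct a, b; simpl in *; auto; lra. }
  destruct (increasing_onto_exists a b Hab) as [phi Hphi].
  pose proof Hphi as [Hsm [Hd [Hr [Hm Hp]]]].
  pose proof (tuv_smooth_u _ _ HAB) as HA. pose proof (tuv_smooth_v _ _ HAB) as HB.
  exists phi. split; [| split; [| split; [| split; [| split]]]].
  - intros s Hs. apply tuv_domain_iff in Hs as [H1 H2].
    now apply (increasing_onto_surj a b phi Hphi).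
  - apply smooth_curve_pt_uv; apply Cinf_comp; auto.
  - intros t. unfold g.
    assert (EA : ex_derive A (phi t)) by now apply Cinf_ex_derive.
    assert (EB : ex_derive B (phi t)) by now apply Cinf_ex_derive.
    assert (Ephi : ex_derive phi t) by now apply Cinf_ex_derive.
    rewrite (velocity_pt_uv (fun t => A (phi t)) (fun t => B (phi t)));
      [| apply (ex_derive_comp A phi); auto | apply (ex_derive_comp B phi); auto].
    rewrite (Derive_comp A phi), (Derive_comp B phi) by auto.
    apply future_timelike_pt_uv; apply Rmult_lt_0_compat; auto; apply HAB.
  - intros t. apply tuv_domain_iff, Hr.
  - apply (tuv_no_limit _ phi b Hp). intros r Er Hr'.
    apply tuv_domain_iff in Hr' as [_ H]. fold b in H. rewrite Er in H. simpl in H. lra.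
  - apply (tuv_no_limit _ phi a Hm). intros r Er Hr'.
    apply tuv_domain_iff in Hr' as [H _]. fold a in H. rewrite Er in H. simpl in H. lra.
Qed.

Lemma tuv_meets_cauchy S : cauchy_in S U -> forall s0, J s0 -> exists s, J s /\ S (g s).
Proof.
  intros HS s0 Hs0. destruct (tuv_inextendible_reparam s0 Hs0) as [phi [_ Hc]].
  destruct (HS _ Hc) as [t [St _]]. exists (phi t). split; [apply Hc | exact St].
Qed.

Lemma tuv_meets_cauchy_once S : cauchy_in S U ->
  forall s1 s2, J s1 -> J s2 -> S (g s1) -> S (g s2) -> s1 = s2.
Proof.
  intros HS s1 s2 J1 J2 S1 S2. destruct (tuv_inextendible_reparam s1 J1) as [phi [Hsurj Hc]].
  destruct (HS _ Hc) as [t [_ Ht]].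
  destruct (Hsurj s1 J1) as [t1 <-], (Hsurj s2 J2) as [t2 <-].
  now rewrite (Ht t1 S1), (Ht t2 S2).
Qed.

End TimelikeCurve.

Lemma Rbar_mult_pos_infty k (l : Rbar) : 0 < k -> (l = p_infty \/ l = m_infty) -> Rbar_mult k l = l.
Proof.
  intros Hk [-> | ->]; apply is_Rbar_mult_unique, is_Rbar_mult_sym;
    [apply is_Rbar_mult_p_infty_pos | apply is_Rbar_mult_m_infty_pos]; exact Hk.
Qed.

Lemma timelike_uv_line u0 v0 a b : 0 < a -> 0 < b ->
  timelike_uv_curve (fun s => u0 + a * s) (fun s => v0 + b * s).
Proof.
  intros Ha Hb.
  assert (Hlim : forall l : Rbar, l = p_infty \/ l = m_infty ->
    is_lim (fun s => (u0 + a * s) + (v0 + b * s)) l l).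
  { intros l Hl. apply is_lim_ext with (fun s => (u0 + v0) + (a + b) * s); [intros; ring |].
    apply (is_lim_plus _ _ l (u0 + v0) l); [apply is_lim_const | |].
    - rewrite <- (Rbar_mult_pos_infty (a + b) l) at 2 by (auto; lra).
      apply is_lim_scal_l, is_lim_id.
    - destruct Hl as [-> | ->]; reflexivity. }
  split; try apply Cinf_affine; try (apply Hlim; auto).
  - intros s. rewrite (is_derive_unique _ s a); [exact Ha | auto_derive; auto; ring].
  - intros s. rewrite (is_derive_unique _ s b); [exact Hb | auto_derive; auto; ring].
Qed.

Lemma timelike_uv_exp_curve u0 : timelike_uv_curve (fun s => u0 + exp s) (fun s => s).
Proof.
  split.
  - apply Cinf_plus; [apply Cinf_const | apply Cinf_exp].
  - apply Cinf_id.
  - intros s. rewrite (is_derive_unique _ s (exp s)); [apply exp_pos | auto_derive; auto; ring].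
  - intros s. rewrite Derive_id. lra.
  - apply (is_lim_plus _ _ m_infty (u0 + 0) m_infty); [| apply is_lim_id | reflexivity].
    apply (is_lim_plus _ _ m_infty u0 0); [apply is_lim_const | apply is_lim_exp_m | reflexivity].
  - apply (is_lim_plus _ _ p_infty p_infty p_infty); [| apply is_lim_id | reflexivity].
    apply (is_lim_plus _ _ p_infty u0 p_infty); [apply is_lim_const | apply is_lim_exp_p | reflexivity].
Qed.

Definition meets_timelike_curves (S U : pt -> Prop) : Prop :=
  forall A B, timelike_uv_curve A B -> forall s0, U (pt_uv (A s0) (B s0)) ->
    exists s, U (pt_uv (A s) (B s)) /\ S (pt_uv (A s) (B s)).

Section CauchySurface.

Variables (S U : pt -> Prop).
Hypotheses (HU : open U) (HC : causally_convex U) (HS : cauchy_in S U) (HSU : forall p, S p -> U p).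

Lemma cauchy_meets_timelike_curves : meets_timelike_curves S U.
Proof. intros A B HAB. now apply tuv_meets_cauchy. Qed.

Lemma cauchy_achronal : achronal S.
Proof.
  intros p q Sp Sq Hpq.
  set (A := fun s => uc p + (uc q - uc p) * s). set (B := fun s => vc p + (vc q - vc p) * s).
  assert (E0 : pt_uv (A 0) (B 0) = p).
  { unfold A, B. rewrite !Rmult_0_r, !Rplus_0_r. apply pt_uv_uc_vc. }
  assert (E1 : pt_uv (A 1) (B 1) = q).
  { unfold A, B. rewrite !Rmult_1_r. replace (uc p + (uc q - uc p)) with (uc q) by ring.
    replace (vc p + (vc q - vc p)) with (vc q) by ring. apply pt_uv_uc_vc. }
  destruct Hpq as [Hu Hv].
  assert (HAB : timelike_uv_curve A B) by (apply timelike_uv_line; lra).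
  assert (H01 : 0 = 1).
  { apply (tuv_meets_cauchy_once U A B HU HC HAB S HS); rewrite ?E0, ?E1; auto. }
  lra.
Qed.

End CauchySurface.

Lemma meets_timelike_curves_cover S U : meets_timelike_curves S U ->
  forall r, U r -> S r \/ chron_future S r \/ chron_past S r.
Proof.
  intros Hmeet r Hr.
  destruct (Hmeet _ _ (timelike_uv_line (uc r) (vc r) 1 1 Rlt_0_1 Rlt_0_1) 0) as [s [_ Ss]].
  { now rewrite !Rmult_0_r, !Rplus_0_r, pt_uv_uc_vc. }
  rewrite !Rmult_1_l in Ss.
  destruct (Rtotal_order s 0) as [Hs | [-> | Hs]].
  - right; left. exists (pt_uv (uc r + s) (vc r + s)). split; auto.
    unfold chron; rewrite uc_pt_uv, vc_pt_uv; lra.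
  - left. now rewrite !Rplus_0_r, pt_uv_uc_vc in Ss.
  - right; right. exists (pt_uv (uc r + s) (vc r + s)). split; auto.
    unfold chron; rewrite uc_pt_uv, vc_pt_uv; lra.
Qed.

Lemma meets_future_curve_false S U A B s0 : meets_timelike_curves S U -> achronal S ->
  timelike_uv_curve A B -> U (pt_uv (A s0) (B s0)) ->
  (forall s, s <= s0 -> U (pt_uv (A s) (B s)) -> chron_future S (pt_uv (A s) (B s))) -> False.
Proof.
  intros Hmeet Hach HAB U0 Hfut.
  destruct (Hmeet A B HAB s0 U0) as [s [Us Ss]].
  assert (Fs : chron_future S (pt_uv (A s) (B s))).
  { destruct (Rle_lt_dec s s0) as [Hle | Hlt]; [now apply Hfut |].
    destruct (Hfut s0 (Rle_refl _) U0) as [x [Sx Hx]]. exists x. split; auto.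
    destruct (tuv_chron A B HAB s0 s Hlt). unfold chron in *; lra. }
  destruct Fs as [x [Sx Hx]]. exact (Hach x _ Sx Ss Hx).
Qed.

(* The point reflection (t, x) |-> (-t, -x): it reverses the time orientation and preserves the
   family of null lines {u = const}. *)
Definition reflect (p : pt) : pt := pt_uv (- uc p) (- vc p).

Lemma reflect_pt_uv u v : reflect (pt_uv u v) = pt_uv (- u) (- v).
Proof. unfold reflect. now rewrite uc_pt_uv, vc_pt_uv. Qed.

Lemma uc_reflect p : uc (reflect p) = - uc p.
Proof. apply uc_pt_uv. Qed.

Lemma vc_reflect p : vc (reflect p) = - vc p.
Proof. apply vc_pt_uv. Qed.

Lemma open_reflect U : open U -> open (fun p => U (reflect p)).
Proof.
  intros HU p Hp. apply locally_uv. destruct (proj1 (locally_uv _ _) (HU _ Hp)) as [d [Hd H]].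
  exists d. split; auto. intros q Hu Hv. apply H; rewrite ?uc_reflect, ?vc_reflect.
  - now replace (- uc q - - uc p) with (- (uc q - uc p)) by ring; rewrite Rabs_Ropp.
  - now replace (- vc q - - vc p) with (- (vc q - vc p)) by ring; rewrite Rabs_Ropp.
Qed.

Lemma causally_convex_reflect U : causally_convex U -> causally_convex (fun p => U (reflect p)).
Proof.
  intros HC p q r Hp Hq Hpr Hrq. apply (HC (reflect q) (reflect p)); auto;
    unfold causal_le in *; rewrite !uc_reflect, !vc_reflect; lra.
Qed.

Lemma achronal_reflect S : achronal S -> achronal (fun p => S (reflect p)).
Proof.
  intros Hach p q Sp Sq Hpq. apply (Hach _ _ Sq Sp).
  unfold chron in *; rewrite !uc_reflect, !vc_reflect; lra.
Qed.

Lemma chron_past_reflect S r : chron_past S r -> chron_future (fun p => S (reflect p)) (reflect r).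
Proof.
  intros [s [Ss Hs]]. exists (reflect s). split.
  - unfold reflect at 1. now rewrite uc_reflect, vc_reflect, !Ropp_involutive, pt_uv_uc_vc.
  - unfold chron in *; rewrite !uc_reflect, !vc_reflect; lra.
Qed.

Lemma timelike_uv_curve_reflect A B : timelike_uv_curve A B ->
  timelike_uv_curve (fun s => - A (- s)) (fun s => - B (- s)).
Proof.
  intros [HA HB HA' HB' Hm Hp].
  assert (Hder : forall f : R -> R, Cinf f ->
    forall s, Derive (fun s => - f (- s)) s = Derive f (- s)).
  { intros f Hf s. apply is_derive_unique.
    auto_derive; [now apply Cinf_ex_derive | change (fun x => f x) with f; ring]. }
  assert (Hlim : forall l : Rbar, l = p_infty \/ l = m_infty -> is_lim (fun s => A s + B s) l l ->
    is_lim (fun s => - A (- s) + - B (- s)) (Rbar_opp l) (Rbar_opp l)).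
  { intros l Hl H. apply is_lim_ext with (fun s => - (A (- s) + B (- s))); [intros; ring |].
    apply is_lim_opp. apply (is_lim_comp (fun s => A s + B s) Ropp (Rbar_opp l) l l); [exact H | |].
    - rewrite <- (Rbar_opp_involutive l) at 2. apply (is_lim_opp (fun s => s)), is_lim_id.
    - destruct Hl as [-> | ->]; exists 0; intros; discriminate. }
  split.
  - now apply Cinf_opp, Cinf_comp_opp.
  - now apply Cinf_opp, Cinf_comp_opp.
  - intros s. rewrite Hder; auto.
  - intros s. rewrite Hder; auto.
  - exact (Hlim p_infty (or_introl eq_refl) Hp).
  - exact (Hlim m_infty (or_intror eq_refl) Hm).
Qed.

Lemma meets_timelike_curves_reflect S U : meets_timelike_curves S U ->
  meets_timelike_curves (fun p => S (reflect p)) (fun p => U (reflect p)).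
Proof.
  intros Hmeet A B HAB s0 Hs0. rewrite reflect_pt_uv in Hs0.
  destruct (Hmeet _ _ (timelike_uv_curve_reflect A B HAB) (- s0)) as [s [Us Ss]].
  { now rewrite !Ropp_involutive. }
  exists (- s). now rewrite !reflect_pt_uv.
Qed.

Section NullLine.

Variables (S U : pt -> Prop) (u0 : R).
Hypotheses (HU : open U) (HC : causally_convex U)
  (Hmeet : meets_timelike_curves S U) (Hach : achronal S)
  (Hno : forall w, U (pt_uv u0 w) -> ~ S (pt_uv u0 w)).

Let W w := U (pt_uv u0 w).

Lemma null_segment_iff w : W w <-> Rbar_lt (Glb_Rbar W) w /\ Rbar_lt w (Lub_Rbar W).
Proof.
  apply interval_Glb_Lub_iff.
  - intros w' Hw'. destruct (proj1 (locally_uv _ _) (HU _ Hw')) as [d [Hd H]].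
    exists (mkposreal d Hd). intros y Hy.
    apply H; rewrite ?uc_pt_uv, ?vc_pt_uv; [rewrite Rminus_diag, Rabs_R0; exact Hd | exact Hy].
  - intros w1 w2 w3 H1 H2 Hw. apply (HC (pt_uv u0 w1) (pt_uv u0 w2)); auto;
      unfold causal_le; rewrite !uc_pt_uv, !vc_pt_uv; lra.
Qed.

Lemma null_future_or_past w : W w ->
  chron_future S (pt_uv u0 w) \/ chron_past S (pt_uv u0 w).
Proof.
  intros Hw. destruct (meets_timelike_curves_cover S U Hmeet _ Hw) as [H | H]; auto.
  exfalso; exact (Hno w Hw H).
Qed.

Lemma null_past_before_future w1 w2 : w1 < w2 -> W w1 -> W w2 ->
  chron_past S (pt_uv u0 w1) -> chron_future S (pt_uv u0 w2) -> False.
Proof.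
  intros H12 W1 W2 P1 F2.
  set (Z := fun w => w <= w2 /\ chron_past S (pt_uv u0 w)).
  destruct (completeness Z) as [c [Hub Hlub]].
  { exists w2. intros w [Hw _]. exact Hw. }
  { exists w1. split; [lra | exact P1]. }
  assert (Hc1 : w1 <= c) by (apply Hub; split; [lra | exact P1]).
  assert (Hc2 : c <= w2) by (apply Hlub; intros w [Hw _]; exact Hw).
  assert (Wc : W c) by (apply (HC (pt_uv u0 w1) (pt_uv u0 w2)); auto;
    unfold causal_le; rewrite !uc_pt_uv, !vc_pt_uv; lra).
  destruct (null_future_or_past c Wc) as [[s [Ss Hs]] | [s [Ss Hs]]];
    unfold chron in Hs; rewrite uc_pt_uv, vc_pt_uv in Hs.
  - assert (Hz : exists z, Z z /\ vc s < z).
    { apply NNPP; intros Hn. assert (c <= vc s); [| lra].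
      apply Hlub. intros z Hz. apply Rnot_lt_le. intros Hlt. apply Hn. now exists z. }
    destruct Hz as [z [[_ Pz] Hz]]. apply (achronal_future_past S (pt_uv u0 z) Hach); [| exact Pz].
    exists s. split; auto. unfold chron; rewrite uc_pt_uv, vc_pt_uv; lra.
  - destruct (Req_dec c w2) as [-> | Hne].
    + apply (achronal_future_past S _ Hach F2). exists s. split; auto.
      unfold chron; rewrite uc_pt_uv, vc_pt_uv; lra.
    + set (z := Rmin ((c + vc s) / 2) w2).
      assert (Hz : Z z).
      { split; [apply Rmin_r |]. exists s. split; auto.
        unfold chron; rewrite uc_pt_uv, vc_pt_uv. unfold z.
        pose proof (Rmin_l ((c + vc s) / 2) w2). split; lra. }
      specialize (Hub z Hz). unfold z in Hub. unfold Rmin in Hub.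
      destruct (Rle_dec ((c + vc s) / 2) w2); lra.
Qed.

(* If the null segment below w0 lay in the chronological future of S, a timelike curve running
   into the past end of the segment, just to its future, would stay in that future and so could
   not meet S.  At a finite end (u0, a) take the timelike line issuing from that point; otherwise
   take a curve asymptotic to the null line. *)
Section PastEnd.

Variable w0 : R.
Hypotheses (W0 : W w0) (F0 : chron_future S (pt_uv u0 w0)).

Lemma null_segment_below (w : R) : Rbar_lt (Glb_Rbar W) w -> w <= w0 -> W w.
Proof.
  intros Hw Hle. apply null_segment_iff. split; auto.
  destruct (proj1 (null_segment_iff w0) W0) as [_ Hhi].
  revert Hhi. destruct (Lub_Rbar W); simpl; intros; auto; lra.
Qed.

Lemma null_future_below w r : W w -> w <= w0 -> causal_le (pt_uv u0 w) r -> chron_future S r.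
Proof.
  intros Hw Hle Hr. apply chron_future_causal with (pt_uv u0 w); auto.
  destruct (Req_dec w w0) as [-> | Hne]; auto.
  destruct (null_future_or_past w Hw) as [Fw | Pw]; auto.
  exfalso. apply (null_past_before_future w w0); auto; lra.
Qed.

Lemma null_box_future : exists d, 0 < d /\ forall s, 0 <= s < d -> U (pt_uv (u0 + s) w0).
Proof.
  destruct (proj1 (locally_uv _ _) (HU _ W0)) as [d [Hd Hbox]].
  exists d. split; auto. intros s Hs. apply Hbox; rewrite ?uc_pt_uv, ?vc_pt_uv.
  - replace (u0 + s - u0) with s by ring. rewrite Rabs_right; lra.
  - rewrite Rminus_diag, Rabs_R0; exact Hd.
Qed.

Lemma null_past_end_finite (a : R) : Glb_Rbar W = a -> False.
Proof.
  intros Ea. destruct null_box_future as [d [Hd Ubox]].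
  pose proof (proj1 (null_segment_iff w0) W0) as [Hlo _]. rewrite Ea in Hlo. simpl in Hlo.
  set (s0 := Rmin d (w0 - a) / 2).
  assert (Hs0 : 0 < s0 < d /\ s0 < w0 - a).
  { unfold s0. pose proof (Rmin_l d (w0 - a)). pose proof (Rmin_r d (w0 - a)).
    assert (0 < Rmin d (w0 - a)) by (apply Rmin_pos; lra). lra. }
  assert (U0 : U (pt_uv (u0 + 1 * s0) (a + 1 * s0))).
  { rewrite !Rmult_1_l. apply (HC (pt_uv u0 (a + s0 / 2)) (pt_uv (u0 + s0) w0)).
    - apply null_segment_below; [rewrite Ea; simpl |]; lra.
    - apply Ubox; lra.
    - unfold causal_le; rewrite !uc_pt_uv, !vc_pt_uv; lra.
    - unfold causal_le; rewrite !uc_pt_uv, !vc_pt_uv; lra. }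
  apply (meets_future_curve_false S U (fun s => u0 + 1 * s) (fun s => a + 1 * s) s0 Hmeet Hach);
    [apply timelike_uv_line; lra | exact U0 |].
  intros s Hs Us.
  assert (Hpos : 0 < s).
  { apply Rnot_le_lt. intros Hle.
    assert (Wa : W a).
    { apply (HC _ _ _ Us U0); unfold causal_le; rewrite !uc_pt_uv, !vc_pt_uv; lra. }
    apply null_segment_iff in Wa as [Wa _]. rewrite Ea in Wa. simpl in Wa. lra. }
  apply (null_future_below (a + s / 2)); [apply null_segment_below; [rewrite Ea; simpl |] | |]; try lra.
  unfold causal_le; rewrite !uc_pt_uv, !vc_pt_uv; lra.
Qed.

Lemma null_past_end_infinite : Glb_Rbar W = m_infty -> False.
Proof.
  intros Ea. destruct null_box_future as [d [Hd Ubox]].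
  set (s0 := Rmin (ln d) w0 - 1).
  assert (Hs0 : exp s0 < d /\ s0 < w0).
  { unfold s0. pose proof (Rmin_l (ln d) w0). pose proof (Rmin_r (ln d) w0). split; [| lra].
    apply Rlt_le_trans with (exp (ln d)); [apply exp_increasing; lra | rewrite exp_ln; lra]. }
  apply (meets_future_curve_false S U (fun s => u0 + exp s) (fun s => s) s0 Hmeet Hach);
    [apply timelike_uv_exp_curve | |].
  - pose proof (exp_pos s0).
    apply (HC (pt_uv u0 (s0 - 1)) (pt_uv (u0 + exp s0) w0)).
    + apply null_segment_below; [rewrite Ea |]; simpl; auto; lra.
    + apply Ubox; lra.
    + unfold causal_le; rewrite !uc_pt_uv, !vc_pt_uv; lra.
    + unfold causal_le; rewrite !uc_pt_uv, !vc_pt_uv; lra.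
  - intros s Hs _. pose proof (exp_pos s).
    apply (null_future_below (s - 1));
      [apply null_segment_below; [rewrite Ea |]; simpl; auto | |]; try lra.
    unfold causal_le; rewrite !uc_pt_uv, !vc_pt_uv; lra.
Qed.

End PastEnd.

Lemma null_line_not_future w0 : W w0 -> chron_future S (pt_uv u0 w0) -> False.
Proof.
  intros W0 F0. pose proof (proj1 (null_segment_iff w0) W0) as [Hlo _].
  destruct (Glb_Rbar W) as [a | |] eqn:Ea; simpl in Hlo.
  - exact (null_past_end_finite w0 W0 F0 a Ea).
  - contradiction.
  - exact (null_past_end_infinite w0 W0 F0 Ea).
Qed.

End NullLine.

Lemma null_line_meets S U : open U -> causally_convex U -> meets_timelike_curves S U -> achronal S ->
  forall p, U p -> exists w, U (pt_uv (uc p) w) /\ S (pt_uv (uc p) w).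
Proof.
  intros HU HC Hmeet Hach p Hp. apply NNPP; intros Hn.
  assert (Hno : forall w, U (pt_uv (uc p) w) -> ~ S (pt_uv (uc p) w)).
  { intros w H1 H2. apply Hn. now exists w. }
  assert (Wp : U (pt_uv (uc p) (vc p))) by now rewrite pt_uv_uc_vc.
  destruct (meets_timelike_curves_cover S U Hmeet p Hp) as [Sp | [Fp | Pp]].
  - apply (Hno (vc p) Wp). now rewrite pt_uv_uc_vc.
  - apply (null_line_not_future S U (uc p) HU HC Hmeet Hach Hno (vc p) Wp).
    now rewrite pt_uv_uc_vc.
  - apply (null_line_not_future (fun q => S (reflect q)) (fun q => U (reflect q)) (- uc p)
      (open_reflect U HU) (causally_convex_reflect U HC)
      (meets_timelike_curves_reflect S U Hmeet) (achronal_reflect S Hach)) with (- vc p).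
    + intros w. rewrite reflect_pt_uv, Ropp_involutive. apply Hno.
    + rewrite reflect_pt_uv, !Ropp_involutive. exact Wp.
    + now apply chron_past_reflect.
Qed.

Lemma derive_nonzero_not_min (f g : R -> R) a0 k eps : is_derive f a0 k -> k <> 0 ->
  continuous g a0 -> 0 < eps -> exists a, f a < f a0 /\ Rabs (g a - g a0) < eps.
Proof.
  intros Hf Hk Hg He. apply NNPP; intros Hn.
  destruct (Hg (fun y => Rabs (y - g a0) < eps)) as [d Hd]; [now exists (mkposreal eps He) |].
  assert (Hmin : forall x, a0 - d < x -> x < a0 + d -> f a0 <= f x).
  { intros x H1 H2. apply Rnot_lt_le. intros Hlt. apply Hn. exists x. split; auto.
    apply Hd. change (Rabs (x - a0) < d). apply Rabs_def1; lra. }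
  assert (Hpr : derivable_pt_lim f a0 k) by now apply is_derive_Reals.
  apply Hk. rewrite <- (derive_pt_eq_0 f a0 k (exist _ k Hpr) Hpr).
  apply (deriv_minimum f (a0 - d) (a0 + d)); auto; pose proof (cond_pos d); lra.
Qed.

(* Along St, u varies at a nonzero rate at q1 (the tangent is spacelike), so points of St near q1
   with smaller u lie in the chronological past of q2. *)
Lemma spacelike_achronal_null_line St q1 q2 : spacelike_hypersurface St -> achronal St ->
  St q1 -> St q2 -> uc q1 = uc q2 -> vc q1 < vc q2 -> False.
Proof.
  intros Hsp Hach S1 S2 Eu Ev.
  destruct (Hsp q1 S1) as [W [s [_ [Wq [[Hs1 Hs2] [Hvel [_ [Hin [Hsurj _]]]]]]]]].
  destruct (Hsurj q1 S1 Wq) as [a0 Ha0].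
  assert (E1 : ex_derive (fun a => fst (s a)) a0) by exact (Hs1 1%nat a0).
  assert (E2 : ex_derive (fun a => snd (s a)) a0) by exact (Hs2 1%nat a0).
  set (X := velocity s a0).
  assert (Hdu : du X <> 0).
  { intros H0. specialize (Hvel a0). fold X in Hvel. unfold gM in Hvel.
    rewrite H0, !Rmult_0_l, Rplus_0_l in Hvel. unfold Rdiv in Hvel. lra. }
  assert (Hu : is_derive (fun a => uc (s a)) a0 (du X)).
  { apply (is_derive_minus (fun a => fst (s a)) (fun a => snd (s a))); now apply Derive_correct. }
  assert (Hv : continuous (fun a => vc (s a)) a0).
  { apply (ex_derive_continuous (fun a => fst (s a) + snd (s a))).
    now apply (ex_derive_plus (fun a => fst (s a)) (fun a => snd (s a))). }
  destruct (derive_nonzero_not_min _ _ a0 (du X) (vc q2 - vc q1) Hu Hdu Hv) as [a [Ha1 Ha2]]; [lra |].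
  rewrite Ha0 in Ha1, Ha2. apply Rabs_def2 in Ha2 as [Ha2 _].
  apply (Hach (s a) q2 (proj1 (Hin a)) S2). unfold chron. split; lra.
Qed.

Lemma cauchy_object_achronal S U : cauchy_object S U -> achronal S.
Proof. intros [HU [HC [HSU [_ HS]]]]. now apply (cauchy_achronal S U). Qed.

Lemma cauchy_null_line_unique St Ut q1 q2 : cauchy_object St Ut ->
  St q1 -> St q2 -> uc q1 = uc q2 -> q1 = q2.
Proof.
  intros Hobj S1 S2 Eu. pose proof (cauchy_object_achronal St Ut Hobj) as Hach.
  destruct Hobj as [_ [_ [_ [Hsp _]]]].
  destruct (Rtotal_order (vc q1) (vc q2)) as [Hlt | [Heq | Hgt]].
  - exfalso. now apply (spacelike_achronal_null_line St q1 q2).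
  - now apply pt_eq_uv.
  - exfalso. now apply (spacelike_achronal_null_line St q2 q1).
Qed.

Lemma open_uv_box (U : pt -> Prop) u v : open U -> U (pt_uv u v) ->
  exists d, 0 < d /\ forall a b, Rabs a < d -> Rabs b < d -> U (pt_uv (u + a) (v + b)).
Proof.
  intros HU Huv. destruct (proj1 (locally_uv _ _) (HU _ Huv)) as [d [Hd H]].
  exists d. split; auto. intros a b Ha Hb.
  apply H; rewrite !uc_pt_uv || rewrite !vc_pt_uv.
  - now replace (u + a - u) with a by ring.
  - now replace (v + b - v) with b by ring.
Qed.

Lemma smooth_on_differentiable (U : pt -> Prop) (f : pt -> R) (x y : R) :
  open U -> smooth_on U f -> U (x, y) ->
  differentiable_pt_lim (fun a b => f (a, b)) x y (Dt f (x, y)) (Dx f (x, y)).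
Proof.
  intros HU Hf Hp. apply filterdiff_differentiable_pt_lim.
  apply (is_derive_filterdiff (fun a b => f (a, b)) x y (fun a b => Dt f (a, b)) (Dx f (x, y))).
  - apply (filter_imp U); [| exact (HU _ Hp)].
    intros [a b] Hab. apply Derive_correct. exact (proj1 (Hf nil (a, b) Hab)).
  - apply Derive_correct. exact (proj1 (proj2 (Hf nil (x, y) Hp))).
  - apply continuous_ext with (Dt f); [now intros [a b] |].
    exact (proj2 (proj2 (Hf (cons true nil) (x, y) Hp))).
Qed.

Lemma is_derive_along_line (U : pt -> Prop) (f : pt -> R) a b X1 X2 l0 :
  open U -> smooth_on U f -> U (a + l0 * X1, b + l0 * X2) ->
  is_derive (fun l => f (a + l * X1, b + l * X2)) l0
    (Dt f (a + l0 * X1, b + l0 * X2) * X1 + Dx f (a + l0 * X1, b + l0 * X2) * X2).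
Proof.
  intros HU Hf Hp. apply is_derive_Reals.
  apply (derivable_pt_lim_comp_2d (fun a b => f (a, b)) (fun l => a + l * X1) (fun l => b + l * X2)).
  - now apply (smooth_on_differentiable U).
  - apply is_derive_Reals. auto_derive; auto; ring.
  - apply is_derive_Reals. auto_derive; auto; ring.
Qed.

Lemma is_derive_null_v (U : pt -> Prop) (f : pt -> R) u0 w0 :
  open U -> smooth_on U f -> U (pt_uv u0 w0) ->
  is_derive (fun w => f (pt_uv u0 w)) w0 ((Dt f (pt_uv u0 w0) + Dx f (pt_uv u0 w0)) / 2).
Proof.
  intros HU Hf Hp.
  assert (E : forall w, pt_uv u0 w = (u0 / 2 + w * (1 / 2), - u0 / 2 + w * (1 / 2))).
  { intros w; unfold pt_uv; f_equal; field. }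
  apply is_derive_ext with (fun l => f (u0 / 2 + l * (1 / 2), - u0 / 2 + l * (1 / 2)));
    [intros; now rewrite E |].
  rewrite E. replace ((Dt f _ + Dx f _) / 2) with
    (Dt f (u0 / 2 + w0 * (1 / 2), - u0 / 2 + w0 * (1 / 2)) * (1 / 2) +
     Dx f (u0 / 2 + w0 * (1 / 2), - u0 / 2 + w0 * (1 / 2)) * (1 / 2)) by field.
  apply (is_derive_along_line U); auto. now rewrite <- E.
Qed.

Lemma is_derive_null_u (U : pt -> Prop) (f : pt -> R) u0 w0 :
  open U -> smooth_on U f -> U (pt_uv u0 w0) ->
  is_derive (fun u => f (pt_uv u w0)) u0 ((Dt f (pt_uv u0 w0) - Dx f (pt_uv u0 w0)) / 2).
Proof.
  intros HU Hf Hp.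
  assert (E : forall u, pt_uv u w0 = (w0 / 2 + u * (1 / 2), w0 / 2 + u * (- 1 / 2))).
  { intros u; unfold pt_uv; f_equal; field. }
  apply is_derive_ext with (fun l => f (w0 / 2 + l * (1 / 2), w0 / 2 + l * (- 1 / 2)));
    [intros; now rewrite E |].
  rewrite E. replace ((Dt f _ - Dx f _) / 2) with
    (Dt f (w0 / 2 + u0 * (1 / 2), w0 / 2 + u0 * (- 1 / 2)) * (1 / 2) +
     Dx f (w0 / 2 + u0 * (1 / 2), w0 / 2 + u0 * (- 1 / 2)) * (- 1 / 2)) by field.
  apply (is_derive_along_line U); auto. now rewrite <- E.
Qed.

Lemma eq_of_is_derive_0 (f : R -> R) a b :
  (forall x, Rmin a b <= x <= Rmax a b -> is_derive f x 0) -> f a = f b.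
Proof.
  intros H. destruct (MVT_gen f a b (fun _ => 0)) as [c [_ Hc]].
  - intros x Hx. apply H; lra.
  - intros x Hx. apply continuity_pt_filterlim, (ex_derive_continuous f). eexists; now apply H.
  - lra.
Qed.

Lemma causally_convex_null_segment (U : pt -> Prop) u0 w1 w2 : causally_convex U ->
  U (pt_uv u0 w1) -> U (pt_uv u0 w2) -> forall w, Rmin w1 w2 <= w <= Rmax w1 w2 -> U (pt_uv u0 w).
Proof.
  intros HC H1 H2 w Hw. unfold Rmin, Rmax in Hw. destruct (Rle_dec w1 w2).
  - apply (HC (pt_uv u0 w1) (pt_uv u0 w2)); auto; unfold causal_le; rewrite !uc_pt_uv, !vc_pt_uv; lra.
  - apply (HC (pt_uv u0 w2) (pt_uv u0 w1)); auto; unfold causal_le; rewrite !uc_pt_uv, !vc_pt_uv; lra.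
Qed.

Section ConformalEmbedding.

Variables (chi : pt -> pt) (U Ut : pt -> Prop) (oml omr : pt -> R).
Hypotheses (HU : open U) (HC : causally_convex U) (Hadm : conf_admissible chi U Ut)
  (Hdu : pullback_du chi U oml) (Hdv : pullback_dv chi U omr).

Let c1 q := fst (chi q).
Let c2 q := snd (chi q).

Lemma chi_partials p : U p ->
  Dt c1 p - Dt c2 p = oml p /\ Dx c1 p - Dx c2 p = - oml p /\
  Dt c1 p + Dt c2 p = omr p /\ Dx c1 p + Dx c2 p = omr p.
Proof.
  intros Hp.
  pose proof (Hdu p (1, 0) Hp) as A1. pose proof (Hdu p (0, 1) Hp) as A2.
  pose proof (Hdv p (1, 0) Hp) as A3. pose proof (Hdv p (0, 1) Hp) as A4.
  unfold du, dv, dchi in *; simpl in *. fold c1 c2 in A1, A2, A3, A4.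
  repeat split; lra.
Qed.

Lemma conformal_factors_pos p : U p -> 0 < oml p /\ 0 < omr p.
Proof.
  intros Hp. destruct (chi_partials p Hp) as [P1 [_ [P3 _]]].
  destruct Hadm as [_ [_ [_ [_ [_ [_ [_ [_ [_ [Hto _]]]]]]]]]].
  assert (Ht : future_timelike (1, 0)) by (unfold future_timelike, gM, du, dv; simpl; lra).
  specialize (Hto p (1, 0) Hp Ht). unfold future_timelike, gM, du, dv, dchi in Hto; simpl in Hto.
  fold c1 c2 in Hto. destruct Hto as [T1 T2].
  replace (Dt c1 p) with ((oml p + omr p) / 2) in T1, T2 by lra.
  replace (Dt c2 p) with ((omr p - oml p) / 2) in T1 by lra.
  assert (0 < oml p * omr p) by nra.
  split; nra.
Qed.

Lemma omr_continuous p : U p -> continuous omr p.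
Proof.
  intros Hp. apply continuous_ext_loc with (fun q => Dt c1 q + Dt c2 q).
  - apply (filter_imp U); [| exact (HU _ Hp)]. intros q Hq. apply (chi_partials q Hq).
  - apply (continuous_plus (Dt c1) (Dt c2));
      [exact (proj2 (proj2 (proj1 Hadm (cons true nil) p Hp)))
      | exact (proj2 (proj2 (proj1 (proj2 Hadm) (cons true nil) p Hp)))].
Qed.

Lemma uc_chi_derive_v u0 w0 : U (pt_uv u0 w0) ->
  is_derive (fun w => uc (chi (pt_uv u0 w))) w0 0.
Proof.
  intros Hp. destruct (chi_partials _ Hp) as [P1 [P2 [P3 P4]]].
  replace 0 with ((Dt c1 (pt_uv u0 w0) + Dx c1 (pt_uv u0 w0)) / 2 -
                  (Dt c2 (pt_uv u0 w0) + Dx c2 (pt_uv u0 w0)) / 2) by lra.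
  apply (is_derive_minus (fun w => c1 (pt_uv u0 w)) (fun w => c2 (pt_uv u0 w)));
    apply (is_derive_null_v U); auto; apply Hadm.
Qed.

Lemma vc_chi_derive_v u0 w0 : U (pt_uv u0 w0) ->
  is_derive (fun w => vc (chi (pt_uv u0 w))) w0 (omr (pt_uv u0 w0)).
Proof.
  intros Hp. destruct (chi_partials _ Hp) as [P1 [P2 [P3 P4]]].
  replace (omr (pt_uv u0 w0)) with ((Dt c1 (pt_uv u0 w0) + Dx c1 (pt_uv u0 w0)) / 2 +
                                    (Dt c2 (pt_uv u0 w0) + Dx c2 (pt_uv u0 w0)) / 2) by lra.
  apply (is_derive_plus (fun w => c1 (pt_uv u0 w)) (fun w => c2 (pt_uv u0 w)));
    apply (is_derive_null_v U); auto; apply Hadm.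
Qed.

Lemma uc_chi_derive_u u0 w0 : U (pt_uv u0 w0) ->
  is_derive (fun u => uc (chi (pt_uv u w0))) u0 (oml (pt_uv u0 w0)).
Proof.
  intros Hp. destruct (chi_partials _ Hp) as [P1 [P2 [P3 P4]]].
  replace (oml (pt_uv u0 w0)) with ((Dt c1 (pt_uv u0 w0) - Dx c1 (pt_uv u0 w0)) / 2 -
                                    (Dt c2 (pt_uv u0 w0) - Dx c2 (pt_uv u0 w0)) / 2) by lra.
  apply (is_derive_minus (fun u => c1 (pt_uv u w0)) (fun u => c2 (pt_uv u w0)));
    apply (is_derive_null_u U); auto; apply Hadm.
Qed.

Lemma uc_chi_null_line u0 w1 w2 : U (pt_uv u0 w1) -> U (pt_uv u0 w2) ->
  uc (chi (pt_uv u0 w1)) = uc (chi (pt_uv u0 w2)).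
Proof.
  intros H1 H2. apply (eq_of_is_derive_0 (fun w => uc (chi (pt_uv u0 w)))).
  intros w Hw. apply uc_chi_derive_v, (causally_convex_null_segment U u0 w1 w2); auto.
Qed.

(* oml is the u-derivative of u o chi, and u o chi is constant along all nearby null lines
   {u = const}, so oml is locally constant along the segment. *)
Lemma oml_null_line u0 w1 w2 : U (pt_uv u0 w1) -> U (pt_uv u0 w2) ->
  oml (pt_uv u0 w1) = oml (pt_uv u0 w2).
Proof.
  intros H1 H2. apply (eq_of_is_derive_0 (fun w => oml (pt_uv u0 w))).
  intros w Hw. pose proof (causally_convex_null_segment U u0 w1 w2 HC H1 H2 w Hw) as Hp.
  destruct (open_uv_box U u0 w HU Hp) as [d [Hd Hbox]].
  assert (Hloc : locally w (fun w' => oml (pt_uv u0 w') = oml (pt_uv u0 w))).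
  { exists (mkposreal d Hd). intros w' Hw'. change (Rabs (w' - w) < d) in Hw'.
    assert (Hp' : U (pt_uv u0 w')).
    { replace w' with (w + (w' - w)) by ring. rewrite <- (Rplus_0_r u0).
      apply Hbox; auto. now rewrite Rabs_R0. }
    rewrite <- (is_derive_unique _ _ _ (uc_chi_derive_u u0 w' Hp')). apply is_derive_unique.
    apply is_derive_ext_loc with (fun u => uc (chi (pt_uv u w))); [| now apply uc_chi_derive_u].
    exists (mkposreal d Hd). intros u Hu. change (Rabs (u - u0) < d) in Hu.
    replace u with (u0 + (u - u0)) by ring. replace w' with (w + (w' - w)) by ring.
    apply uc_chi_null_line; [rewrite <- (Rplus_0_r w) |]; apply Hbox; auto; now rewrite Rabs_R0. }
  apply is_derive_ext_loc with (fun _ => oml (pt_uv u0 w)).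
  - apply (filter_imp _ _ (fun w' H => eq_sym H) Hloc).
  - exact (is_derive_const (V := R_NormedModule) (oml (pt_uv u0 w)) w).
Qed.

End ConformalEmbedding.

Lemma is_RInt_zero_on (f : R -> R) a b :
  (forall x, Rmin a b < x < Rmax a b -> f x = 0) -> is_RInt f a b 0.
Proof.
  intros H. apply is_RInt_ext with (fun _ => 0); [intros x Hx; symmetry; auto |].
  pose proof (is_RInt_const (V := R_NormedModule) a b 0) as H0.
  change (scal (b - a) 0) with ((b - a) * 0) in H0. now rewrite Rmult_0_r in H0.
Qed.

Lemma RInt_gen_supported (f : R -> R) a b : a <= b -> (forall x, x < a \/ b < x -> f x = 0) ->
  ex_RInt f a b -> RInt_gen f (Rbar_locally m_infty) (Rbar_locally p_infty) = RInt f a b.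
Proof.
  intros Hab Hz Hex. apply is_RInt_gen_unique. intros P HP.
  apply (Filter_prod _ _ _ (fun x => x < a) (fun y => b < y)); [now exists a | now exists b |].
  intros x y Hx Hy. exists (RInt f a b). split; [| now apply locally_singleton].
  assert (H1 : is_RInt f x a 0).
  { apply is_RInt_zero_on. intros z Hz'. rewrite Rmin_left, Rmax_right in Hz' by lra. apply Hz; lra. }
  assert (H2 : is_RInt f b y 0).
  { apply is_RInt_zero_on. intros z Hz'. rewrite Rmin_left, Rmax_right in Hz' by lra. apply Hz; lra. }
  replace (RInt f a b) with (plus (plus 0 (RInt f a b)) 0) by (unfold plus; simpl; ring).
  apply (is_RInt_Chasles f x b y); [| exact H2].
  apply (is_RInt_Chasles f x a b); [exact H1 |].
  exact (RInt_correct (V := R_CompleteNormedModule) f a b Hex).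
Qed.

Lemma IVT_incr (G : R -> R) x1 x2 y : x1 <= x2 -> (forall x, x1 <= x <= x2 -> continuous G x) ->
  G x1 <= y <= G x2 -> exists x, x1 <= x <= x2 /\ G x = y.
Proof.
  intros H12 HG [Hy1 Hy2].
  destruct (Req_dec y (G x1)) as [-> | E1]; [exists x1; split; [lra | auto] |].
  destruct (Req_dec y (G x2)) as [-> | E2]; [exists x2; split; [lra | auto] |].
  destruct (Ranalysis5.IVT_interv (fun x => G x - y) x1 x2) as [x [Hx Ex]].
  - intros z Hz. apply continuity_pt_minus; [| apply continuity_pt_const; intros ? ?; auto].
    now apply continuity_pt_filterlim, HG.
  - destruct H12 as [H12 | <-]; [exact H12 | lra].
  - lra.
  - lra.
  - exists x. split; [exact Hx | lra].
Qed.

Lemma continuous_of_strict_incr_comp (f G Phi : R -> R) x d : 0 < d ->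
  (forall w, Rabs (w - x) < d -> continuous G w) ->
  (forall w1 w2, Rabs (w1 - x) < d -> Rabs (w2 - x) < d -> w1 < w2 -> G w1 < G w2) ->
  (forall w, Rabs (w - x) < d -> f (G w) = Phi w) -> continuous Phi x -> continuous f (G x).
Proof.
  intros Hd HG Hincr Hf HPhi P HP.
  destruct HP as [eps Heps].
  destruct (HPhi (ball (Phi x) eps)) as [d1 Hd1]; [now exists eps |].
  set (e := Rmin d d1 / 2).
  assert (He : 0 < e /\ e < d /\ e < d1).
  { unfold e. pose proof (Rmin_l d d1). pose proof (Rmin_r d d1).
    assert (0 < Rmin d d1) by (apply Rmin_pos; [lra | apply cond_pos]). lra. }
  assert (Hx : Rabs (x - x) < d) by (rewrite Rminus_diag, Rabs_R0; lra).
  assert (Hm : Rabs (x - e - x) < d) by (rewrite Rabs_left; lra).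
  assert (Hp : Rabs (x + e - x) < d) by (rewrite Rabs_right; lra).
  assert (G1 : G (x - e) < G x) by (apply Hincr; auto; lra).
  assert (G2 : G x < G (x + e)) by (apply Hincr; auto; lra).
  assert (Hr : 0 < Rmin (G x - G (x - e)) (G (x + e) - G x)) by (apply Rmin_pos; lra).
  exists (mkposreal _ Hr). intros y Hy.
  change (Rabs (y - G x) < Rmin (G x - G (x - e)) (G (x + e) - G x)) in Hy.
  pose proof (Rmin_l (G x - G (x - e)) (G (x + e) - G x)).
  pose proof (Rmin_r (G x - G (x - e)) (G (x + e) - G x)).
  apply Rabs_def2 in Hy as [Hy1 Hy2].
  destruct (IVT_incr G (x - e) (x + e) y) as [w [Hw <-]]; [lra | | lra |].
  - intros w Hw. apply HG. apply Rabs_def1; lra.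
  - assert (Hwd : Rabs (w - x) < d) by (apply Rabs_def1; lra).
    apply Heps. rewrite (Hf x Hx), (Hf w Hwd).
    apply Hd1. change (Rabs (w - x) < d1). apply Rabs_def1; lra.
Qed.

Lemma strict_incr_of_derive_pos (G g : R -> R) (W : R -> Prop) :
  (forall w1 w2 w, W w1 -> W w2 -> w1 <= w <= w2 -> W w) ->
  (forall w, W w -> is_derive G w (g w) /\ 0 < g w) ->
  forall w1 w2, W w1 -> W w2 -> w1 < w2 -> G w1 < G w2.
Proof.
  intros Hconv HG w1 w2 W1 W2 H12.
  assert (Hseg : forall x, w1 <= x <= w2 -> W x) by (intros; now apply (Hconv w1 w2)).
  destruct (MVT_gen G w1 w2 g) as [xi [Hxi Exi]].
  - intros x Hx. apply HG, Hseg. rewrite Rmin_left, Rmax_right in Hx by lra. lra.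
  - intros x Hx. apply continuity_pt_filterlim, (ex_derive_continuous G).
    rewrite Rmin_left, Rmax_right in Hx by lra. eexists; apply HG, Hseg, Hx.
  - rewrite Rmin_left, Rmax_right in Hxi by lra.
    destruct (HG xi (Hseg xi ltac:(lra))) as [_ Hpos].
    assert (0 < g xi * (w2 - w1)) by (apply Rmult_lt_0_compat; lra). lra.
Qed.

Lemma RInt_gen_change_of_variables (f G g H : R -> R) (W : R -> Prop) a b :
  (forall w, W w -> locally w W) ->
  (forall w1 w2 w, W w1 -> W w2 -> w1 <= w <= w2 -> W w) ->
  W a -> W b -> a <= b ->
  (forall w, W w -> is_derive G w (g w) /\ continuous g w /\ 0 < g w) ->
  (forall w, W w -> continuous H w) ->
  (forall w, W w -> g w * f (G w) = H w) ->
  (forall y, f y <> 0 -> exists w, a <= w <= b /\ G w = y) ->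
  RInt_gen f (Rbar_locally m_infty) (Rbar_locally p_infty) = RInt H a b.
Proof.
  intros Hopen Hconv Wa Wb Hab HG HH Hfg Hsupp.
  assert (Wab : forall w, a <= w <= b -> W w) by (intros; now apply (Hconv a b)).
  assert (Hincr : forall w1 w2, W w1 -> W w2 -> w1 < w2 -> G w1 < G w2).
  { apply (strict_incr_of_derive_pos G g W Hconv). intros w Hw. split; apply HG, Hw. }
  assert (HGc : forall w, W w -> continuous G w).
  { intros w Hw. apply (ex_derive_continuous G). eexists; apply HG, Hw. }
  assert (Hfc : forall x, W x -> continuous f (G x)).
  { intros x Wx. destruct (Hopen x Wx) as [d Hd].
    assert (Hball : forall w, Rabs (w - x) < d -> W w) by (intros w Hw; now apply Hd).
    apply (continuous_of_strict_incr_comp f G (fun w => / g w * H w) x d); [apply cond_pos | | | |].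
    - intros w Hw. now apply HGc, Hball.
    - intros w1 w2 H1 H2. apply Hincr; auto.
    - intros w Hw. rewrite <- (Hfg w (Hball w Hw)). field.
      destruct (HG w (Hball w Hw)) as [_ [_ Hpos]]. lra.
    - destruct (HG x Wx) as [_ [Hgc Hpos]].
      apply (continuous_mult (fun w => / g w) H); [| now apply HH].
      apply continuous_Rinv_comp; [exact Hgc | lra]. }
  assert (HGab : G a <= G b).
  { destruct Hab as [Hlt | <-]; [left; now apply Hincr | apply Rle_refl]. }
  assert (Hex : ex_RInt f (G a) (G b)).
  { apply (ex_RInt_continuous (V := R_CompleteNormedModule)). intros z Hz.
    rewrite Rmin_left, Rmax_right in Hz by exact HGab.
    destruct (IVT_incr G a b z Hab (fun x Hx => HGc x (Wab x Hx)) Hz) as [x [Hx <-]].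
    now apply Hfc, Wab. }
  rewrite (RInt_gen_supported f (G a) (G b) HGab); [| | exact Hex].
  - symmetry. apply is_RInt_unique.
    apply is_RInt_ext with (fun y => scal (g y) (f (G y))).
    + intros x Hx. rewrite Rmin_left, Rmax_right in Hx by exact Hab. apply Hfg, Wab. lra.
    + apply (is_RInt_comp (V := R_CompleteNormedModule)).
      * intros x Hx. rewrite Rmin_left, Rmax_right in Hx by exact Hab. now apply Hfc, Wab.
      * intros x Hx. rewrite Rmin_left, Rmax_right in Hx by exact Hab.
        destruct (HG x (Wab x Hx)) as [Hd [Hc _]]. now split.
  - intros y Hy. apply NNPP. intros Hnz. destruct (Hsupp y Hnz) as [w [[Hw1 Hw2] <-]].
    assert (G a <= G w).
    { destruct Hw1 as [Hlt | <-]; [left; apply Hincr; auto; apply Wab; lra | apply Rle_refl]. }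
    assert (G w <= G b).
    { destruct Hw2 as [Hlt | ->]; [left; apply Hincr; auto; apply Wab; lra | apply Rle_refl]. }
    lra.
Qed.

Lemma compact_bound_above (K F : pt -> Prop) (phi : pt -> R) (W : R -> Prop) w0 :
  compact2 K -> (forall w, open (fun p => ~ F p \/ phi p < w)) -> W w0 ->
  (forall p, K p -> F p -> exists w, W w /\ phi p < w) ->
  exists b, W b /\ forall p, K p -> F p -> phi p < b.
Proof.
  intros HK Hopen W0 Hcov.
  destruct (HK {w | W w} (fun i p => ~ F p \/ phi p < proj1_sig i)) as [l Hl].
  - intros i. apply Hopen.
  - intros p Kp. destruct (classic (F p)) as [Fp | nFp].
    + destruct (Hcov p Kp Fp) as [w [Ww Hw]]. exists (exist _ w Ww). now right.
    + exists (exist _ w0 W0). now left.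
  - exists (fold_right Rmax w0 (map (@proj1_sig _ _) l)). split.
    + clear Hl. induction l as [| i l IH]; simpl; auto.
      unfold Rmax; destruct Rle_dec; auto. apply (proj2_sig i).
    + intros p Kp Fp. destruct (Hl p Kp) as [i [Hi [nF | Hlt]]]; [contradiction |].
      apply Rlt_le_trans with (proj1_sig i); auto. clear - Hi.
      induction l as [| j l IH]; simpl in *; [contradiction |].
      destruct Hi as [-> | Hi]; [apply Rmax_l | eapply Rle_trans; [apply IH, Hi | apply Rmax_r]].
Qed.

Lemma open_off_null_line_or_below (u0 k w : R) : Rabs k = 1 ->
  open (fun p => ~ uc p = u0 \/ k * vc p < w).
Proof.
  intros Hk p Hp. apply locally_uv. destruct Hp as [Hne | Hlt].
  - exists (Rabs (uc p - u0)). split; [apply Rabs_pos_lt; lra |].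
    intros q Hu _. left. intros Eq. rewrite Eq, Rabs_minus_sym in Hu. lra.
  - exists (w - k * vc p). split; [lra |]. intros q _ Hv. right.
    pose proof (Rle_abs (k * (vc q - vc p))) as Hle. rewrite Rabs_mult, Hk in Hle. nra.
Qed.

Lemma test_function_null_support (U : pt -> Prop) h u0 w0 : open U -> test_function U h ->
  U (pt_uv u0 w0) -> exists a b, a <= b /\ U (pt_uv u0 a) /\ U (pt_uv u0 b) /\
    forall w, w < a \/ b < w -> h (pt_uv u0 w) = 0.
Proof.
  intros HU [_ [K [HK [HKU Hh]]]] W0.
  set (W := fun w => U (pt_uv u0 w)).
  assert (Hgap : forall p, K p -> uc p = u0 -> exists e, 0 < e /\ W (vc p - e) /\ W (vc p + e)).
  { intros p Kp Ep.
    assert (Wp : U (pt_uv u0 (vc p))) by (rewrite <- Ep, pt_uv_uc_vc; auto).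
    destruct (open_uv_box U u0 (vc p) HU Wp) as [d [Hd Hbox]].
    exists (d / 2). unfold W. rewrite <- (Rplus_0_r u0).
    split; [lra | split; apply Hbox];
      try rewrite Rabs_Ropp; try rewrite Rabs_R0; try rewrite Rabs_right; lra. }
  destruct (compact_bound_above K (fun p => uc p = u0) (fun p => 1 * vc p) W w0 HK) as [b [Wb Hb]].
  { intros w. apply open_off_null_line_or_below, Rabs_R1. }
  { exact W0. }
  { intros p Kp Ep. destruct (Hgap p Kp Ep) as [e [He [_ We]]]. exists (vc p + e). split; [auto | lra]. }
  destruct (compact_bound_above K (fun p => uc p = u0) (fun p => -1 * vc p) (fun w => W (- w)) (- w0) HK)
    as [a [Wa Ha]].
  { intros w. apply open_off_null_line_or_below. rewrite Rabs_left; lra. }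
  { unfold W. now rewrite Ropp_involutive. }
  { intros p Kp Ep. destruct (Hgap p Kp Ep) as [e [He [We _]]].
    exists (- (vc p - e)). split; [now rewrite Ropp_involutive | lra]. }
  assert (Hz : forall w, w <= - a \/ b <= w -> h (pt_uv u0 w) = 0).
  { intros w Hw. apply NNPP; intros Hnz.
    assert (Kw : K (pt_uv u0 w)) by (apply NNPP; intros nK; apply Hnz, Hh, nK).
    specialize (Ha _ Kw (uc_pt_uv _ _)). specialize (Hb _ Kw (uc_pt_uv _ _)).
    rewrite vc_pt_uv in Ha, Hb. lra. }
  destruct (Rle_dec (- a) b) as [Hab | Hab].
  - exists (- a), b. repeat split; auto. intros w Hw; apply Hz; lra.
  - exists w0, w0. repeat split; auto; [lra |]. intros w _; apply Hz; lra.
Qed.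

Lemma push_image (A : pt -> Prop) chi f p :
  (forall p1 p2, A p1 -> A p2 -> chi p1 = chi p2 -> p1 = p2) -> A p -> push A chi f (chi p) = f p.
Proof.
  intros Hinj Hp. unfold push. destruct (excluded_middle_informative _) as [H | H].
  - destruct (constructive_indefinite_description _ H) as [p1 [Hp1 E]]. simpl. f_equal. now apply Hinj.
  - exfalso. apply H. now exists p.
Qed.

Lemma push_outside (A : pt -> Prop) chi f q : ~ (exists p, A p /\ chi p = q) -> push A chi f q = 0.
Proof. intros H. unfold push. destruct (excluded_middle_informative _); [contradiction | reflexivity]. Qed.

Lemma eta_vanishing (f : pt -> R) q : (forall w, f (pt_uv (uc q) w) = 0) -> eta f q = 0.
Proof.
  intros H. unfold eta. rewrite (RInt_gen_supported _ 0 0); [| lra | auto | apply ex_RInt_point].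
  apply (RInt_point (V := R_CompleteNormedModule)).
Qed.

Lemma null_line_through_image S U St Ut chi oml omr q p :
  cauchy_object S U -> cauchy_object St Ut -> cauchy_morphism S U St Ut chi ->
  pullback_du chi U oml -> pullback_dv chi U omr ->
  St q -> U p -> uc (chi p) = uc q -> exists ps, S ps /\ uc ps = uc p /\ chi ps = q.
Proof.
  intros Hobj Hobjt [Hadm [HSSt _]] Hdu Hdv Sq Up Eu.
  pose proof Hobj as [HU [HC [HSU [_ HS]]]].
  destruct (null_line_meets S U HU HC (cauchy_meets_timelike_curves S U HU HC HS)
    (cauchy_achronal S U HU HC HS HSU) p Up) as [w [Uw Sw]].
  exists (pt_uv (uc p) w). split; [exact Sw | split; [apply uc_pt_uv |]].
  apply (cauchy_null_line_unique St Ut); auto. rewrite <- Eu.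
  transitivity (uc (chi (pt_uv (uc p) (vc p)))); [| now rewrite pt_uv_uc_vc].
  apply (uc_chi_null_line chi U Ut oml omr HU HC Hadm Hdu Hdv); auto. now rewrite pt_uv_uc_vc.
Qed.

Section NullLineImage.

Variables (mu : R) (chi : pt -> pt) (U Ut : pt -> Prop) (oml omr h : pt -> R) (p0 : pt).
Hypotheses (HU : open U) (HC : causally_convex U) (Hadm : conf_admissible chi U Ut)
  (Hdu : pullback_du chi U oml) (Hdv : pullback_dv chi U omr) (Hh : test_function U h) (Up0 : U p0)
  (Hpre : forall p, U p -> uc (chi p) = uc (chi p0) -> uc p = uc p0).

Let u0 := uc p0.
Let W w := U (pt_uv u0 w).
Let G w := vc (chi (pt_uv u0 w)).
Let f y := D_mu0 mu U chi oml omr h (pt_uv (uc (chi p0)) y).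

Let W_p0 : W (vc p0).
Proof. unfold W, u0. now rewrite pt_uv_uc_vc. Qed.

Lemma chi_null_line w : W w -> chi (pt_uv u0 w) = pt_uv (uc (chi p0)) (G w).
Proof.
  intros Hw. apply pt_eq_uv; rewrite ?uc_pt_uv, ?vc_pt_uv; [| reflexivity].
  transitivity (uc (chi (pt_uv u0 (vc p0)))); [| unfold u0; now rewrite pt_uv_uc_vc].
  apply (uc_chi_null_line chi U Ut oml omr HU HC Hadm Hdu Hdv); [exact Hw | exact W_p0].
Qed.

Lemma D_mu0_null_line w : W w ->
  omr (pt_uv u0 w) * f (G w) = Rpower (oml p0) (mu - 1) * h (pt_uv u0 w).
Proof.
  intros Hw. unfold f. rewrite <- chi_null_line by exact Hw. unfold D_mu0.
  rewrite push_image; [| apply Hadm | exact Hw].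
  rewrite (oml_null_line chi U Ut oml omr HU HC Hadm Hdu Hdv u0 w (vc p0) Hw W_p0).
  unfold u0. rewrite pt_uv_uc_vc. field.
  destruct (conformal_factors_pos chi U Ut oml omr Hadm Hdu Hdv (pt_uv (uc p0) w) Hw). lra.
Qed.

Lemma D_mu0_null_line_support y : f y <> 0 -> exists w, W w /\ G w = y.
Proof.
  intros Hy. unfold f, D_mu0 in Hy.
  destruct (classic (exists p, U p /\ chi p = pt_uv (uc (chi p0)) y)) as [[p [Up Ep]] | Hn];
    [| now rewrite push_outside in Hy].
  assert (Eu : uc p = u0) by (apply Hpre; auto; now rewrite Ep, uc_pt_uv).
  assert (Ep' : pt_uv u0 (vc p) = p) by (rewrite <- Eu; apply pt_uv_uc_vc).
  exists (vc p). unfold W, G. rewrite Ep', Ep, vc_pt_uv. auto.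
Qed.

Lemma eta_D_mu0_null_line :
  eta (D_mu0 mu U chi oml omr h) (chi p0) = Rpower (oml p0) (mu - 1) * eta h p0.
Proof.
  destruct (test_function_null_support U h u0 (vc p0) HU Hh W_p0) as [a [b [Hab [Wa [Wb Hsupp]]]]].
  assert (Hhc : forall w, continuous (fun w => h (pt_uv u0 w)) w).
  { intros w. apply (continuous_comp (fun w => pt_uv u0 w) h).
    - apply continuous_pt_uv; [apply continuous_const | apply continuous_id].
    - destruct Hh as [Hsm _]. exact (proj2 (proj2 (Hsm nil _ I))). }
  assert (Hex : ex_RInt (fun w => h (pt_uv u0 w)) a b).
  { apply (ex_RInt_continuous (V := R_CompleteNormedModule)). intros; apply Hhc. }
  unfold eta at 2. fold u0. rewrite (RInt_gen_supported _ a b Hab Hsupp Hex).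
  rewrite <- (RInt_scal (V := R_CompleteNormedModule) _ a b _ Hex).
  apply (RInt_gen_change_of_variables f G (fun w => omr (pt_uv u0 w)) _ W a b); auto.
  - intros w Hw. destruct (open_uv_box U u0 w HU Hw) as [d [Hd Hbox]].
    exists (mkposreal d Hd). intros w' Hw'. change (Rabs (w' - w) < d) in Hw'.
    unfold W. replace w' with (w + (w' - w)) by ring. rewrite <- (Rplus_0_r u0).
    apply Hbox; auto. now rewrite Rabs_R0.
  - intros w1 w2 w H1 H2 Hw. apply (causally_convex_null_segment U u0 w1 w2); auto.
    rewrite Rmin_left, Rmax_right; lra.
  - intros w Hw. split; [| split].
    + now apply (vc_chi_derive_v chi U Ut oml omr HU Hadm Hdu Hdv).
    + apply (continuous_comp (fun w => pt_uv u0 w) omr).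
      * apply continuous_pt_uv; [apply continuous_const | apply continuous_id].
      * now apply (omr_continuous chi U Ut oml omr HU Hadm Hdu Hdv).
    + now apply (conformal_factors_pos chi U Ut oml omr Hadm Hdu Hdv).
  - intros w _. apply (continuous_scal_r (V := R_NormedModule)), Hhc.
  - intros w Hw. now rewrite D_mu0_null_line.
  - intros y Hy. destruct (D_mu0_null_line_support y Hy) as [w [Hw <-]].
    exists w. split; [| reflexivity].
    destruct (conformal_factors_pos chi U Ut oml omr Hadm Hdu Hdv _ Hw) as [_ Hpos].
    assert (Hhw : h (pt_uv u0 w) <> 0).
    { intros H0. apply Hy. apply (Rmult_eq_reg_l (omr (pt_uv u0 w))); [| lra].
      rewrite D_mu0_null_line, H0 by exact Hw. ring. }
    split; apply Rnot_lt_le; intros Hlt; apply Hhw, Hsupp; auto.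
Qed.

End NullLineImage.

Theorem mainTheorem11 (mu : R) (S U St Ut : pt -> Prop) (chi : pt -> pt)
  (oml omr : pt -> R) :
  cauchy_object S U -> cauchy_object St Ut ->
  cauchy_morphism S U St Ut chi ->
  pullback_du chi U oml -> pullback_dv chi U omr ->
  forall h : pt -> R, test_function U h ->
  forall q : pt, St q ->
    eta (D_mu0 mu U chi oml omr h) q = D_ell mu S chi oml (eta h) q.
Proof.
  intros Hobj Hobjt Hmor Hdu Hdv h Hh q Sq.
  pose proof Hobj as [HU [HC [HSU _]]]. pose proof Hmor as [Hadm _].
  assert (Hinj : forall p1 p2, U p1 -> U p2 -> chi p1 = chi p2 -> p1 = p2) by apply Hadm.
  unfold D_ell. destruct (classic (exists p0, S p0 /\ chi p0 = q)) as [[p0 [Sp0 <-]] | Hnot].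
  - rewrite push_image; [| intros; apply Hinj; auto | exact Sp0].
    apply eta_D_mu0_null_line with Ut; auto.
    intros p Up Eu.
    destruct (null_line_through_image S U St Ut chi oml omr (chi p0) p) as [ps [Sps [Eps Ech]]]; auto.
    rewrite <- Eps. f_equal. apply Hinj; auto.
  - rewrite push_outside by exact Hnot. apply eta_vanishing. intros w. apply push_outside.
    intros [p [Up Ep]]. apply Hnot.
    destruct (null_line_through_image S U St Ut chi oml omr q p) as [ps [Sps [_ Ech]]]; auto.
    + now rewrite Ep, uc_pt_uv.
    + now exists ps.
Qed.
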